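(* Let $k\ge1$, let $A\neq B$ be points of $S^1$, and let $\Delta:(S^1,A)\to(S^1,B)$ be a germ of local diffeomorphism. Let $\gimel(\Delta;A,B)$ be the subalgebra of $C^\infty(S^1,\mathbb{R})$ consisting of all functions $f$ such that the $(k-1)$-jets at $A$ of $f$ and of $f\circ\Delta$ coincide. Then $\gimel(\Delta;A,B)$ belongs to $\overline{CD}_k(S^1)$, i.e., it is an equilevel algebra of codimension $k$.
   Context: Let $S^1=\mathbb{R}/2\pi\mathbb{Z}$. For $k\ge 1$ let $F(S^1,2k)\subset (S^1)^{2k}$ be the set of sequences $(x_1,\tilde x_1;\dots;x_k,\tilde x_k)$ of $2k$ pairwise distinct points; such a sequence defines the subalgebra $\{f\in C^\infty(S^1,\mathbb{R}): f(x_i)=f(\tilde x_i)\ \forall i\}$. Given an algebraic parametric curve germ $\nu:[0,\varepsilon)\to (S^1)^{2k}$ with $\nu(t)\in F(S^1,2k)$ for $t\in(0,\varepsilon)$, let $\mathcal{F}_t$ be the subalgebra defined by $\nu(t)$, and let $\mathcal{F}_0$ be the set of all $f$ for which there exists a family $f_t$, $t\in[0,\varepsilon)$, continuous in the $C^{2k}$ topology, with $f_0=f$ and $f_t\in\mathcal{F}_t$ for $t>0$. Such $\mathcal{F}_0$ are the equilevel algebras of codimension $k$; their set is $\overline{CD}_k(S^1)$. *)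

From Stdlib Require Import Reals Lra ZArith.
From Coquelicot Require Import Coquelicot.
Open Scope R_scope.

(** Points of S^1 = R/2piZ are represented by real representatives;
    two reals represent the same point iff they differ by 2*PI*z. *)
Definition eqS1 (x y : R) : Prop := exists z : Z, x - y = 2 * PI * IZR z.

(** Functions on S^1: 2pi-periodic functions R -> R. *)
Definition periodic (f : R -> R) : Prop := forall x, f (x + 2 * PI) = f x.

Definition smooth (f : R -> R) : Prop := forall (n : nat) (x : R), ex_derive_n f n x.

Definition CinfS1 (f : R -> R) : Prop := smooth f /\ periodic f.

Definition smooth_near (D : R -> R) (a r : R) : Prop :=
  forall x, Rabs (x - a) < r -> forall n : nat, ex_derive_n D n x.

(** A germ of local diffeomorphism (S^1,A) -> (S^1,B), given by a lift D
    with D A = B (the representatives A, B being fixed): D restricts to a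
    smooth diffeomorphism between neighbourhoods of A and B, with smooth
    inverse G. Only the values of D near A matter. *)
Definition local_diffeo_germ (D : R -> R) (A B : R) : Prop :=
  D A = B /\
  exists (r s : R) (G : R -> R), 0 < r /\ 0 < s /\
    smooth_near D A r /\ smooth_near G B s /\
    (forall x, Rabs (x - A) < r -> Rabs (D x - B) < s /\ G (D x) = x) /\
    (forall y, Rabs (y - B) < s -> Rabs (G y - A) < r /\ D (G y) = y).

Definition gimel (k : nat) (D : R -> R) (A : R) (f : R -> R) : Prop :=
  CinfS1 f /\
  forall j : nat, (j < k)%nat -> Derive_n f j A = Derive_n (fun x => f (D x)) j A.

Fixpoint rsum (n : nat) (f : nat -> R) : R :=
  match n with
  | O => 0
  | S m => rsum m f + f m
  end.

Definition cont_on_Ico (eps : R) (g : R -> R) : Prop :=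
  forall t0, 0 <= t0 < eps -> forall d, 0 < d ->
    exists h, 0 < h /\ forall t, 0 <= t < eps -> Rabs (t - t0) < h ->
      Rabs (g t - g t0) < d.

Definition algebraic_on (eps : R) (g : R -> R) : Prop :=
  exists (N : nat) (c : nat -> nat -> R),
    (exists a b, (a < N)%nat /\ (b < N)%nat /\ c a b <> 0) /\
    forall t, 0 <= t < eps ->
      rsum N (fun a => rsum N (fun b => c a b * t ^ a * (g t) ^ b)) = 0.

(** A curve nu : [0,eps) -> (S^1)^(2k), given via lifts of its 2k angle
    coordinates nu t 0, ..., nu t (2k-1); the sequence is
    (x_1, x~_1; ...; x_k, x~_k) with x_{i+1} = nu t (2i), x~_{i+1} = nu t (2i+1).
    Algebraic parametric curve germ: each coordinate is continuous and
    algebraic in t on [0, eps). *)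
Definition alg_curve_germ (k : nat) (eps : R) (nu : R -> nat -> R) : Prop :=
  0 < eps /\
  forall i : nat, (i < 2 * k)%nat ->
    cont_on_Ico eps (fun t => nu t i) /\ algebraic_on eps (fun t => nu t i).

Definition in_config (k : nat) (p : nat -> R) : Prop :=
  forall i j : nat, (i < 2 * k)%nat -> (j < 2 * k)%nat -> i <> j -> ~ eqS1 (p i) (p j).

Definition alg_of_config (k : nat) (p : nat -> R) (f : R -> R) : Prop :=
  CinfS1 f /\ forall i : nat, (i < k)%nat -> f (p (2 * i)%nat) = f (p (2 * i + 1)%nat).

Definition Cm_continuous_family (m : nat) (eps : R) (F : R -> R -> R) : Prop :=
  forall t0, 0 <= t0 < eps -> forall d, 0 < d ->
    exists h, 0 < h /\ forall t, 0 <= t < eps -> Rabs (t - t0) < h ->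
      forall (j : nat) (x : R), (j <= m)%nat ->
        Rabs (Derive_n (F t) j x - Derive_n (F t0) j x) < d.

Definition limit_algebra (k : nat) (eps : R) (nu : R -> nat -> R) (f : R -> R) : Prop :=
  exists F : R -> R -> R,
    F 0 = f /\
    CinfS1 f /\
    (forall t, 0 < t < eps -> alg_of_config k (nu t) (F t)) /\
    Cm_continuous_family (2 * k) eps F.

Definition in_CDbar (k : nat) (Alg : (R -> R) -> Prop) : Prop :=
  exists (eps : R) (nu : R -> nat -> R),
    alg_curve_germ k eps nu /\
    (forall t, 0 < t < eps -> in_config k (nu t)) /\
    forall f, limit_algebra k eps nu f <-> Alg f.

From Stdlib Require Import Reals Lra Lia ZArith Arith FunctionalExtensionality.
From Coquelicot Require Import Coquelicot.
Open Scope R_scope.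

(* Let P be the Taylor polynomial of order k-1 of D at A and use the curve of configurations
   pairing x_i = A + (i+1) t with P x_i, i < k; its coordinates are polynomial in t.
   Since D - P = O((x - A)^k), a smooth f has the same (k-1)-jets at A as f o D exactly when
   f (P x) - f x = O((x - A)^k) as x -> A+, i.e. when f o P - f is flat of order k at A.
   If F_t -> f in C^2k with F_t (x_i) = F_t (P x_i), then F_t o P - F_t vanishes at the k points
   x_i, so by Rolle each of its derivatives of order < k vanishes within k t of A; letting t -> 0
   shows that f o P - f is flat of order k at A.
   Conversely, for such f put F_t = f + sum_i K_i(t) B_i(t, .), where the trigonometric
   polynomial B_i(t, .) vanishes at every P x_m and at every x_l, l <> i, and |B_i(t, x_i)| is
   of order t^(k-1); the coefficients K_i(t) = O(t^k / t^(k-1)) tend to 0, so F_t -> f in every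
   C^n, while F_t (x_i) = f (P x_i) = F_t (P x_i). *)

Definition Rball (A r : R) (y : R) : Prop := Rabs (y - A) < r.

Lemma Rball_center A r : 0 < r -> Rball A r A.
Proof. intros Hr. unfold Rball. rewrite Rminus_diag, Rabs_R0. exact Hr. Qed.

Lemma open_Rball A r : open (Rball A r).
Proof.
  intros x Hx. assert (Hd : 0 < r - Rabs (x - A)) by (unfold Rball in Hx; lra).
  exists (mkposreal _ Hd). intros y Hy. change (Rabs (y - x) < r - Rabs (x - A)) in Hy.
  unfold Rball. replace (y - A) with ((y - x) + (x - A)) by ring.
  eapply Rle_lt_trans; [apply Rabs_triang | lra].
Qed.

Definition C_on (U : R -> Prop) (n : nat) (g : R -> R) : Prop :=
  forall x, U x -> forall m, (m <= n)%nat -> ex_derive_n g m x.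

Definition smooth_on (U : R -> Prop) (g : R -> R) : Prop := forall n, C_on U n g.

Lemma Derive_n_S f n x : Derive_n f (S n) x = Derive_n (Derive f) n x.
Proof. rewrite <- Nat.add_1_r, <- (Derive_n_comp f n 1). reflexivity. Qed.

Lemma ex_derive_n_SS f n x : ex_derive_n f (S (S n)) x <-> ex_derive_n (Derive f) (S n) x.
Proof.
  change (ex_derive (Derive_n f (S n)) x <-> ex_derive (Derive_n (Derive f) n) x).
  rewrite (functional_extensionality _ _ (Derive_n_S f n)). tauto.
Qed.

Lemma C_on_S U n g :
  C_on U (S n) g <-> (forall x, U x -> ex_derive g x) /\ C_on U n (Derive g).
Proof.
  split.
  - intros H. split; [intros x Hx; exact (H x Hx 1%nat ltac:(lia))|].
    intros x Hx [|m] Hm; [exact I|].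
    apply (proj1 (ex_derive_n_SS g m x)), H; [exact Hx | lia].
  - intros [H1 H2] x Hx [|[|m]] Hm; [exact I | exact (H1 x Hx) |].
    apply (proj2 (ex_derive_n_SS g m x)), H2; [exact Hx | lia].
Qed.

Lemma C_on_le U n m g : (m <= n)%nat -> C_on U n g -> C_on U m g.
Proof. intros Hmn H x Hx j Hj. apply H; auto; lia. Qed.

Lemma C_on_locally U n g x : open U -> U x -> C_on U n g ->
  locally x (fun y => forall m, (m <= n)%nat -> ex_derive_n g m y).
Proof. intros HU Hx H. apply (locally_open U); auto. Qed.

Lemma C_on_ext U n g h : open U -> (forall y, U y -> g y = h y) -> C_on U n g -> C_on U n h.
Proof.
  intros HU Heq H x Hx m Hm. apply ex_derive_n_ext_loc with g; [|apply H; auto].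
  apply (locally_open U); auto.
Qed.

Lemma C_on_0 U g : C_on U 0 g.
Proof. intros x _ m Hm. replace m with 0%nat by lia. exact I. Qed.

Lemma C_on_plus U n g h : open U -> C_on U n g -> C_on U n h -> C_on U n (fun y => g y + h y).
Proof.
  intros HU Hg Hh x Hx m Hm.
  apply ex_derive_n_plus; apply (locally_open U); auto; intros y Hy j Hj;
    [apply Hg | apply Hh]; auto; lia.
Qed.

Lemma C_on_const U n c : open U -> C_on U n (fun _ => c).
Proof.
  intro HU. revert c. induction n; intros c; [apply C_on_0|].
  apply C_on_S. split; [intros; apply ex_derive_const|].
  apply C_on_ext with (fun _ => 0); auto.
  intros y _. rewrite Derive_const. reflexivity.
Qed.

Lemma C_on_mult U n : open U -> forall g h, C_on U n g -> C_on U n h -> C_on U n (fun y => g y * h y).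
Proof.
  intros HU. induction n; intros g h Hg Hh; [apply C_on_0|].
  pose proof Hg as [Hg1 Hg2]%C_on_S. pose proof Hh as [Hh1 Hh2]%C_on_S.
  apply C_on_S. split; [intros x Hx; apply ex_derive_mult; auto|].
  apply C_on_ext with (fun y => Derive g y * h y + g y * Derive h y); auto.
  - intros y Hy. rewrite Derive_mult; auto.
  - apply C_on_plus; auto; apply IHn; auto; apply C_on_le with (S n); auto.
Qed.

Lemma C_on_comp U n : open U -> forall g X,
  C_on (fun _ => True) n g -> C_on U n X -> C_on U n (fun y => g (X y)).
Proof.
  intros HU. induction n; intros g X Hg HX; [apply C_on_0|].
  pose proof Hg as [Hg1 Hg2]%C_on_S. pose proof HX as [HX1 HX2]%C_on_S.
  apply C_on_S. split; [intros x Hx; apply ex_derive_comp; auto|].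
  apply C_on_ext with (fun y => Derive g (X y) * Derive X y); auto.
  - intros y Hy. symmetry. rewrite Rmult_comm. apply is_derive_unique.
    apply (is_derive_comp g X y); apply Derive_correct; auto.
  - apply C_on_mult; auto. apply IHn; auto. apply C_on_le with (S n); auto.
Qed.

Section SmoothOn.
Variable U : R -> Prop.
Hypothesis HU : open U.

Lemma smooth_on_plus g h : smooth_on U g -> smooth_on U h -> smooth_on U (fun y => g y + h y).
Proof. intros Hg Hh n. apply C_on_plus; auto. Qed.

Lemma smooth_on_mult g h : smooth_on U g -> smooth_on U h -> smooth_on U (fun y => g y * h y).
Proof. intros Hg Hh n. apply C_on_mult; auto. Qed.

Lemma smooth_on_const c : smooth_on U (fun _ => c).
Proof. intros n. apply C_on_const; auto. Qed.

Lemma smooth_on_ext g h : (forall y, U y -> g y = h y) -> smooth_on U g -> smooth_on U h.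
Proof. intros He H n. apply C_on_ext with g; auto. Qed.

Lemma smooth_on_comp g X : smooth g -> smooth_on U X -> smooth_on U (fun y => g (X y)).
Proof. intros Hg HX n. apply C_on_comp; auto. intros x _ m _. apply Hg. Qed.

Lemma smooth_on_Derive g : smooth_on U g -> smooth_on U (Derive g).
Proof. intros H n. apply (proj2 (proj1 (C_on_S U n g) (H (S n)))). Qed.

Lemma smooth_on_id : smooth_on U (fun y => y).
Proof.
  intros [|n]; [apply C_on_0|]. apply C_on_S. split; [intros; apply ex_derive_id|].
  apply C_on_ext with (fun _ => 1); auto; [intros y _; rewrite Derive_id; reflexivity|].
  apply C_on_const; auto.
Qed.

Lemma smooth_on_minus g h : smooth_on U g -> smooth_on U h -> smooth_on U (fun y => g y - h y).
Proof.
  intros Hg Hh. apply smooth_on_ext with (fun y => g y + (-1) * h y); [intros; ring|].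
  apply smooth_on_plus; auto. apply smooth_on_mult; auto. apply smooth_on_const.
Qed.

Lemma smooth_on_pow A m : smooth_on U (fun y => (y - A) ^ m).
Proof.
  induction m; simpl; [apply smooth_on_const|].
  apply smooth_on_mult; auto. apply smooth_on_minus; [apply smooth_on_id | apply smooth_on_const].
Qed.

Lemma smooth_on_ex_derive g x : smooth_on U g -> U x -> ex_derive g x.
Proof. intros H Hx. exact (H 1%nat x Hx 1%nat (le_n _)). Qed.

Lemma smooth_on_locally g x n : smooth_on U g -> U x ->
  locally x (fun y => forall m, (m <= n)%nat -> ex_derive_n g m y).
Proof. intros H Hx. apply C_on_locally with U; auto. Qed.

End SmoothOn.

Lemma smooth_smooth_on U g : smooth g -> smooth_on U g.
Proof. intros H n x _ m _. apply H. Qed.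

Lemma smooth_on_True g : smooth_on (fun _ => True) g -> smooth g.
Proof. intros H n x. exact (H n x I n (le_n _)). Qed.

Lemma smooth_locally g x n : smooth g ->
  locally x (fun y => forall m, (m <= n)%nat -> ex_derive_n g m y).
Proof. intros H. apply (smooth_on_locally _ open_true); auto. now apply smooth_smooth_on. Qed.

Fixpoint rprod (n : nat) (f : nat -> R) : R :=
  match n with O => 1 | S m => rprod m f * f m end.

Lemma rsum_ext n f g : (forall i, (i < n)%nat -> f i = g i) -> rsum n f = rsum n g.
Proof. induction n; simpl; intros H; auto. rewrite IHn, H; auto. Qed.

Lemma rprod_ext n f g : (forall i, (i < n)%nat -> f i = g i) -> rprod n f = rprod n g.
Proof. induction n; simpl; intros H; auto. rewrite IHn, H; auto. Qed.

Lemma rsum_eq0 n f : (forall i, (i < n)%nat -> f i = 0) -> rsum n f = 0.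
Proof. induction n; simpl; intros H; auto. rewrite IHn, H; auto; ring. Qed.

Lemma rsum_eq1 n f i : (i < n)%nat -> (forall l, (l < n)%nat -> l <> i -> f l = 0) ->
  rsum n f = f i.
Proof.
  induction n; intros Hi H; [lia|]. simpl. destruct (Nat.eq_dec i n) as [->|Hin].
  - rewrite rsum_eq0; [ring|]. intros l Hl. apply H; lia.
  - rewrite IHn, (H n); [ring | lia | lia | lia | intros; apply H; lia].
Qed.

Lemma rsum_plus n f g : rsum n (fun a => f a + g a) = rsum n f + rsum n g.
Proof. induction n; simpl; [ring|]. rewrite IHn. ring. Qed.

Lemma rsum_scal n f c : rsum n (fun a => c * f a) = c * rsum n f.
Proof. induction n; simpl; [ring|]. rewrite IHn. ring. Qed.

Lemma rsum_shift n f : rsum (S n) f = f 0%nat + rsum n (fun a => f (S a)).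
Proof. induction n; simpl; [ring|]. simpl in IHn. rewrite IHn. ring. Qed.

Lemma rsum_sum_f_R0 n f : rsum (S n) f = sum_f_R0 f n.
Proof. induction n; [simpl; ring|]. change (rsum (S (S n)) f) with (rsum (S n) f + f (S n)). now rewrite IHn. Qed.

Lemma rsum_abs_le n f e : (forall a, (a < n)%nat -> Rabs (f a) <= e) -> Rabs (rsum n f) <= INR n * e.
Proof.
  induction n; intros H; [simpl; rewrite Rabs_R0; lra|].
  change (rsum (S n) f) with (rsum n f + f n).
  eapply Rle_trans; [apply Rabs_triang|]. rewrite S_INR.
  assert (Rabs (rsum n f) <= INR n * e) by (apply IHn; intros; apply H; lia).
  assert (Rabs (f n) <= e) by (apply H; lia). lra.
Qed.

Lemma rsum_nonneg n f : (forall i, (i < n)%nat -> 0 <= f i) -> 0 <= rsum n f.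
Proof. induction n; intros H; simpl; [lra|]. pose proof (H n ltac:(lia)). pose proof (IHn ltac:(auto)). lra. Qed.

Lemma rsum_ge_term n f a : (forall i, (i < n)%nat -> 0 <= f i) -> (a < n)%nat -> f a <= rsum n f.
Proof.
  induction n; intros H Ha; [lia|]. simpl. pose proof (H n ltac:(lia)).
  destruct (Nat.eq_dec a n) as [->|].
  - pose proof (rsum_nonneg n f ltac:(auto)). lra.
  - assert (f a <= rsum n f) by (apply IHn; auto; lia). lra.
Qed.

Lemma rprod_eq0 n f i : (i < n)%nat -> f i = 0 -> rprod n f = 0.
Proof.
  induction n; intros Hi H; [lia|]. simpl. destruct (Nat.eq_dec i n) as [->|].
  - rewrite H. ring.
  - rewrite IHn by (auto; lia). ring.
Qed.

Lemma rprod_abs n f : Rabs (rprod n f) = rprod n (fun l => Rabs (f l)).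
Proof. induction n; simpl; [apply Rabs_R1|]. now rewrite Rabs_mult, IHn. Qed.

Lemma rprod_le n f g : (forall l, (l < n)%nat -> 0 <= g l <= f l) -> rprod n g <= rprod n f.
Proof.
  assert (Hpos : forall m, (forall l, (l < m)%nat -> 0 <= g l) -> 0 <= rprod m g).
  { induction m; intros H; simpl; [lra|]. apply Rmult_le_pos; [apply IHm; intros|]; apply H; lia. }
  induction n; intros H; simpl; [lra|].
  apply Rmult_le_compat; [apply Hpos; intros; apply H; lia | apply H; lia
    | apply IHn; intros; apply H; lia | apply H; lia].
Qed.

Lemma rprod_const n b : rprod n (fun _ => b) = b ^ n.
Proof. induction n; simpl; auto. rewrite IHn. ring. Qed.

Lemma rprod_const_but_one n i b : (i < n)%nat ->
  rprod n (fun l => if Nat.eq_dec l i then 1 else b) = b ^ (n - 1).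
Proof.
  assert (Hbelow : forall m, (m <= i)%nat -> rprod m (fun l => if Nat.eq_dec l i then 1 else b) = b ^ m).
  { induction m; intros Hm; simpl; auto. rewrite IHm by lia. destruct (Nat.eq_dec m i); [lia | ring]. }
  induction n; intros Hi; [lia|]. simpl. destruct (Nat.eq_dec n i) as [->|].
  - rewrite Hbelow, Rmult_1_r by lia. f_equal. lia.
  - rewrite IHn by lia. destruct n as [|n]; [lia|]. simpl. rewrite !Nat.sub_0_r. ring.
Qed.

Lemma is_derive_Rplus (f g : R -> R) x a b :
  is_derive f x a -> is_derive g x b -> is_derive (fun y => f y + g y) x (a + b).
Proof. intros Hf Hg. exact (is_derive_plus f g x a b Hf Hg). Qed.

Lemma is_derive_rsum n g dg x : (forall a, (a < n)%nat -> is_derive (g a) x (dg a)) ->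
  is_derive (fun y => rsum n (fun a => g a y)) x (rsum n dg).
Proof.
  induction n; intros H; simpl; [exact (is_derive_const _ _)|].
  apply is_derive_Rplus; [apply IHn; intros|]; apply H; lia.
Qed.

Section SmoothOnSums.
Variable U : R -> Prop.
Hypothesis HU : open U.

Lemma smooth_on_rsum n g : (forall a, (a < n)%nat -> smooth_on U (g a)) ->
  smooth_on U (fun y => rsum n (fun a => g a y)).
Proof.
  induction n; intros H; simpl; [apply smooth_on_const; auto|].
  apply smooth_on_plus; [exact HU | apply IHn; intros; apply H | apply H]; lia.
Qed.

Lemma smooth_on_rprod n g : (forall a, (a < n)%nat -> smooth_on U (g a)) ->
  smooth_on U (fun y => rprod n (fun a => g a y)).
Proof.
  induction n; intros H; simpl; [apply smooth_on_const; auto|].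
  apply smooth_on_mult; [exact HU | apply IHn; intros; apply H | apply H]; lia.
Qed.

End SmoothOnSums.

Definition cont_at (g : R -> R) (x : R) : Prop :=
  forall e, 0 < e -> exists d, 0 < d /\ forall y, Rabs (y - x) < d -> Rabs (g y - g x) < e.

Lemma continuity_pt_of_ex_derive g x : ex_derive g x -> continuity_pt g x.
Proof.
  intros H. apply continuity_pt_filterlim.
  apply (ex_derive_continuous (K := R_AbsRing) (V := R_NormedModule)). exact H.
Qed.

Lemma cont_at_of_continuity_pt g x : continuity_pt g x -> cont_at g x.
Proof.
  intros H e He. destruct (H e He) as [d [Hd H']]. exists d. split; auto.
  intros y Hy. destruct (Req_dec y x) as [->|Hyx]; [rewrite Rminus_diag, Rabs_R0; auto|].
  apply H'. repeat split; auto.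
Qed.

Lemma cont_at_of_ex_derive g x : ex_derive g x -> cont_at g x.
Proof. intros H. apply cont_at_of_continuity_pt, continuity_pt_of_ex_derive, H. Qed.

Lemma cont_at_bounded g x : cont_at g x ->
  exists d, 0 < d /\ forall y, Rabs (y - x) < d -> Rabs (g y) <= Rabs (g x) + 1.
Proof.
  intros H. destruct (H 1 Rlt_0_1) as [d [Hd H']]. exists d. split; auto. intros y Hy.
  pose proof (Rabs_triang_inv (g y) (g x)). specialize (H' y Hy). lra.
Qed.

Lemma finite_threshold (Q : nat -> R -> Prop) m :
  (forall j h h', 0 < h' <= h -> Q j h -> Q j h') ->
  (forall j, (j <= m)%nat -> exists h, 0 < h /\ Q j h) -> exists h, 0 < h /\ forall j, (j <= m)%nat -> Q j h.
Proof.
  intros Hmon. induction m; intros H.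
  - destruct (H 0%nat (le_n _)) as [h [Hh HQ]]. exists h. split; auto. intros j Hj. now replace j with 0%nat by lia.
  - destruct IHm as [h1 [Hh1 HQ1]]; [intros; apply H; lia|].
    destruct (H (S m) (le_n _)) as [h2 [Hh2 HQ2]].
    exists (Rmin h1 h2). split; [apply Rmin_pos; auto|]. intros j Hj.
    pose proof (Rmin_l h1 h2). pose proof (Rmin_r h1 h2). pose proof (Rmin_pos h1 h2 Hh1 Hh2).
    destruct (Nat.eq_dec j (S m)) as [->|].
    + apply Hmon with h2; auto; lra.
    + apply Hmon with h1; [lra | apply HQ1; lia].
Qed.

Lemma bounded_near_finite (c : nat -> R -> R) x0 n : (forall a, (a <= n)%nat -> cont_at (c a) x0) ->
  exists d M, 0 < d /\ 0 <= M /\ forall a x, (a <= n)%nat -> Rabs (x - x0) < d -> Rabs (c a x) <= M.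
Proof.
  intros H.
  destruct (finite_threshold (fun a h => forall x, Rabs (x - x0) < h -> Rabs (c a x) <= Rabs (c a x0) + 1) n)
    as [d [Hd HQ]].
  - intros j h h' Hh HQ x Hx. apply HQ. lra.
  - intros j Hj. apply cont_at_bounded, H, Hj.
  - exists d, (rsum (S n) (fun a => Rabs (c a x0) + 1)).
    split; [auto | split; [apply rsum_nonneg; intros i _; pose proof (Rabs_pos (c i x0)); lra|]].
    intros a x Ha Hx.
    eapply Rle_trans; [apply HQ; auto|].
    apply (rsum_ge_term (S n) (fun a => Rabs (c a x0) + 1)); [intros; pose proof (Rabs_pos (c i x0)); lra | lia].
Qed.

Lemma eq0_of_approx g x : cont_at g x ->
  (forall d, 0 < d -> exists z, Rabs (z - x) < d /\ Rabs (g z) <= d) -> g x = 0.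
Proof.
  intros Hc Happ. destruct (Req_dec (g x) 0) as [|Hne]; auto. exfalso.
  assert (He : 0 < Rabs (g x)) by (apply Rabs_pos_lt; auto).
  destruct (Hc (Rabs (g x) / 2)) as [eta [Heta Hg]]; [lra|].
  destruct (Happ (Rmin eta (Rabs (g x) / 4))) as [z [Hz Hgz]]; [apply Rmin_pos; lra|].
  pose proof (Rmin_l eta (Rabs (g x) / 4)). pose proof (Rmin_r eta (Rabs (g x) / 4)).
  specialize (Hg z ltac:(lra)). pose proof (Rabs_triang_inv (g x) (g z)).
  rewrite Rabs_minus_sym in Hg. lra.
Qed.

Lemma pow_le1 u n : 0 <= u <= 1 -> u ^ n <= 1.
Proof.
  intros Hu. induction n; simpl; [lra|]. pose proof (pow_le u n (proj1 Hu)). nra.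
Qed.

Lemma pow_le_pow_le1 u m n : 0 <= u <= 1 -> (m <= n)%nat -> u ^ n <= u ^ m.
Proof.
  intros Hu Hmn. replace n with (m + (n - m))%nat by lia. rewrite pow_add.
  pose proof (pow_le1 u (n - m) Hu). pose proof (pow_le u m (proj1 Hu)). nra.
Qed.

Definition taylor_poly (h : R -> R) (A : R) (n : nat) (y : R) : R :=
  sum_f_R0 (fun m => (y - A) ^ m / INR (fact m) * Derive_n h m A) n.

Lemma taylor_poly_center h A n : taylor_poly h A n A = h A.
Proof.
  unfold taylor_poly. induction n; simpl; [field|].
  rewrite IHn, Rminus_diag. unfold Rdiv. ring.
Qed.

Lemma smooth_taylor_poly h A n : smooth (taylor_poly h A n).
Proof.
  apply smooth_on_True.
  apply smooth_on_ext with (fun y => rsum (S n) (fun m => (y - A) ^ m * (/ INR (fact m) * Derive_n h m A))).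
  - exact open_true.
  - intros y _. unfold taylor_poly. rewrite rsum_sum_f_R0. apply sum_eq. intros. unfold Rdiv. ring.
  - apply smooth_on_rsum; [exact open_true|]. intros m _.
    apply smooth_on_mult; [exact open_true | apply smooth_on_pow, open_true | apply smooth_on_const, open_true].
Qed.

Lemma taylor_poly_derive_center h A n : (1 <= n)%nat -> is_derive (taylor_poly h A n) A (Derive h A).
Proof.
  induction n as [|n IH]; intros Hn; [lia|].
  change (is_derive (fun y => taylor_poly h A n y + (y - A) ^ S n / INR (fact (S n)) * Derive_n h (S n) A)
    A (Derive h A)).
  destruct n as [|n].
  - rewrite <- (Rplus_0_l (Derive h A)). apply is_derive_Rplus.
    + change (is_derive (fun _ => 1 / INR (fact 0) * h A) A 0). exact (is_derive_const _ _).
    + auto_derive; [exact I|]. change (Derive (fun x => h x) A) with (Derive h A). field.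
  - rewrite <- (Rplus_0_r (Derive h A)). apply is_derive_Rplus; [apply IH; lia|].
    auto_derive; [exact I|]. rewrite Rplus_opp_r. ring.
Qed.

Lemma taylor_remainder_bound h A r n : 0 < r -> smooth_on (Rball A r) h ->
  exists C d, 0 < d /\
    forall x, A < x < A + d -> Rabs (h x - taylor_poly h A n x) <= C * (x - A) ^ S n.
Proof.
  intros Hr Hh.
  destruct (cont_at_bounded (Derive_n h (S n)) A) as [d1 [Hd1 Hb]].
  { apply cont_at_of_ex_derive. exact (Hh (S (S n)) A (Rball_center A r Hr) (S (S n)) (le_n _)). }
  exists ((Rabs (Derive_n h (S n) A) + 1) / INR (fact (S n))), (Rmin d1 r).
  split; [apply Rmin_pos; auto|]. intros x Hx.
  pose proof (Rmin_l d1 r). pose proof (Rmin_r d1 r).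
  destruct (Taylor_Lagrange h n A x) as [z [Hz ->]]; [lra| |].
  { intros t Ht m Hm. apply (Hh (S n) t); [unfold Rball; rewrite Rabs_right; lra | exact Hm]. }
  unfold taylor_poly.
  match goal with |- Rabs (?s + ?e - ?s) <= _ => replace (s + e - s) with e by ring end.
  assert (Hbz : Rabs (Derive_n h (S n) z) <= Rabs (Derive_n h (S n) A) + 1)
    by (apply Hb; rewrite Rabs_right; lra).
  pose proof (INR_fact_lt_0 (S n)). assert (0 <= (x - A) ^ S n) by (apply pow_le; lra).
  assert (Hc : 0 <= (x - A) ^ S n / INR (fact (S n))) by (apply Rmult_le_pos; [lra | left; apply Rinv_0_lt_compat; lra]).
  rewrite Rabs_mult, (Rabs_pos_eq _ Hc).
  apply Rle_trans with ((x - A) ^ S n / INR (fact (S n)) * (Rabs (Derive_n h (S n) A) + 1)).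
  - apply Rmult_le_compat_l; auto.
  - right. field. lra.
Qed.

Lemma flat_bound h A r k : (1 <= k)%nat -> 0 < r -> smooth_on (Rball A r) h ->
  (forall j, (j < k)%nat -> Derive_n h j A = 0) ->
  exists C d, 0 < d /\ forall x, A < x < A + d -> Rabs (h x) <= C * (x - A) ^ k.
Proof.
  intros Hk Hr Hh Hj. destruct (taylor_remainder_bound h A r (k - 1) Hr Hh) as [C [d [Hd HC]]].
  exists C, d. split; auto. intros x Hx. specialize (HC x Hx).
  replace (S (k - 1)) with k in HC by lia. unfold taylor_poly in HC.
  rewrite (sum_eq _ (fun _ => 0)), sum_cte, Rmult_0_l, Rminus_0_r in HC; auto.
  intros m Hm. rewrite Hj by lia. ring.
Qed.

Lemma taylor_lagrange_flat h A x j : A < x ->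
  (forall t, A <= t <= x -> forall m, (m <= j)%nat -> ex_derive_n h m t) ->
  (forall m, (m < j)%nat -> Derive_n h m A = 0) ->
  exists z, A < z <= x /\ h x = (x - A) ^ j / INR (fact j) * Derive_n h j z.
Proof.
  intros Hx Hh Hj. destruct j as [|j].
  - exists x. split; [lra|]. simpl. field.
  - destruct (Taylor_Lagrange h j A x Hx Hh) as [z [Hz ->]]. exists z. split; [lra|].
    rewrite (sum_eq _ (fun _ => 0)), sum_cte; [ring|].
    intros m Hm. rewrite Hj by lia. ring.
Qed.

Lemma flat_of_bound h A r k C d : 0 < r -> 0 < d -> smooth_on (Rball A r) h ->
  (forall x, A < x < A + d -> Rabs (h x) <= C * (x - A) ^ k) ->
  forall j, (j < k)%nat -> Derive_n h j A = 0.
Proof.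
  intros Hr Hd Hh Hb j. induction j as [j IH] using (well_founded_induction lt_wf). intros Hjk.
  apply eq0_of_approx.
  { apply cont_at_of_ex_derive. exact (Hh (S j) A (Rball_center A r Hr) (S j) (le_n _)). }
  intros e He.
  set (K := INR (fact j) * (Rabs C + 1)).
  assert (HK : 0 < K) by (unfold K; pose proof (INR_fact_lt_0 j); pose proof (Rabs_pos C); nra).
  set (u := Rmin (Rmin e d) (Rmin r (Rmin 1 (e / K))) / 2).
  assert (Hu : 0 < u /\ u < e /\ u < d /\ u < r /\ u <= 1 /\ K * u <= e).
  { assert (0 < e / K) by (apply Rdiv_lt_0_compat; lra).
    pose proof (Rmin_l (Rmin e d) (Rmin r (Rmin 1 (e / K)))).
    pose proof (Rmin_r (Rmin e d) (Rmin r (Rmin 1 (e / K)))).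
    pose proof (Rmin_l e d). pose proof (Rmin_r e d).
    pose proof (Rmin_l r (Rmin 1 (e / K))). pose proof (Rmin_r r (Rmin 1 (e / K))).
    pose proof (Rmin_l 1 (e / K)). pose proof (Rmin_r 1 (e / K)).
    assert (0 < Rmin (Rmin e d) (Rmin r (Rmin 1 (e / K)))) by (repeat apply Rmin_pos; lra).
    assert (K * (e / K) = e) by (field; lra).
    unfold u. repeat split; try lra. nra. }
  destruct Hu as [Hu0 [Hue [Hud [Hur [Hu1 HKu]]]]].
  destruct (taylor_lagrange_flat h A (A + u) j) as [z [Hz Hhz]]; [lra | | |].
  - intros t Ht m Hm. apply (Hh j t); [unfold Rball; rewrite Rabs_right; lra | exact Hm].
  - intros m Hm. apply IH; lia.
  - exists z. split; [rewrite Rabs_right; lra|]. replace (A + u - A) with u in Hhz by ring.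
    assert (Hf := INR_fact_lt_0 j). assert (Hpj : 0 < u ^ j) by (apply pow_lt; lra).
    assert (Hbu : Rabs (h (A + u)) <= Rabs C * (u ^ j * u)).
    { eapply Rle_trans; [apply Hb; lra|]. replace (A + u - A) with u by ring.
      eapply Rle_trans; [apply Rmult_le_compat_r; [apply pow_le; lra | apply Rle_abs]|].
      apply Rmult_le_compat_l; [apply Rabs_pos|].
      replace (u ^ j * u) with (u ^ S j) by (simpl; ring). apply pow_le_pow_le1; [lra | lia]. }
    rewrite Hhz, Rabs_mult, Rabs_pos_eq in Hbu by (apply Rmult_le_pos; [lra | left; apply Rinv_0_lt_compat; lra]).
    apply Rle_trans with (K * u); [|lra].
    apply Rmult_le_reg_l with (u ^ j / INR (fact j)); [apply Rdiv_lt_0_compat; lra|].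
    eapply Rle_trans; [exact Hbu|]. unfold K.
    replace (u ^ j / INR (fact j) * (INR (fact j) * (Rabs C + 1) * u)) with (u ^ j * u * (Rabs C + 1)) by (field; lra).
    assert (0 <= u ^ j * u) by nra. nra.
Qed.

Lemma lipschitz_of_derive_bound f a b L :
  (forall z, Rmin a b <= z <= Rmax a b -> ex_derive f z /\ Rabs (Derive f z) <= L) ->
  Rabs (f b - f a) <= L * Rabs (b - a).
Proof.
  intros H. destruct (MVT_gen f a b (Derive f)) as [c [Hc ->]].
  - intros x Hx. apply Derive_correct, H. lra.
  - intros x Hx. apply continuity_pt_of_ex_derive, H. lra.
  - rewrite Rabs_mult. apply Rmult_le_compat_r; [apply Rabs_pos | apply H; auto].
Qed.

Lemma lower_lipschitz_near g A : smooth g -> Derive g A <> 0 ->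
  exists d, 0 < d /\ forall x y, Rabs (x - A) <= d -> Rabs (y - A) <= d ->
    Rabs (Derive g A) / 2 * Rabs (x - y) <= Rabs (g x - g y).
Proof.
  intros Hg Hd1. assert (Hp : 0 < Rabs (Derive g A)) by (apply Rabs_pos_lt; auto).
  destruct (cont_at_of_ex_derive (Derive g) A (Hg 2%nat A) (Rabs (Derive g A) / 2)) as [d [Hd Hc]]; [lra|].
  exists (d / 2). split; [lra|]. intros x y Hx Hy.
  destruct (MVT_gen g y x (Derive g)) as [c [Hcc ->]].
  - intros z _. apply Derive_correct. exact (Hg 1%nat z).
  - intros z _. apply continuity_pt_of_ex_derive. exact (Hg 1%nat z).
  - rewrite Rabs_mult, (Rabs_minus_sym x y). apply Rmult_le_compat_r; [apply Rabs_pos|].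
    assert (Hcd : Rabs (c - A) < d).
    { apply Rabs_le_between in Hx, Hy. apply Rabs_def1;
        [pose proof (Rmax_lub y x (A + d / 2) ltac:(lra) ltac:(lra))
        | pose proof (Rmin_glb y x (A - d / 2) ltac:(lra) ltac:(lra))]; lra. }
    specialize (Hc c Hcd). pose proof (Rabs_triang_inv (Derive g A) (Derive g c)).
    rewrite Rabs_minus_sym in Hc. lra.
Qed.

(** * Rolle's theorem iterated, and derivatives of composites *)

Lemma rolle_Derive g a b : a < b -> (forall x, a <= x <= b -> ex_derive g x) -> g a = g b ->
  exists c, a < c < b /\ Derive g c = 0.
Proof.
  intros Hab Hd Heq.
  assert (pr : forall x, a < x < b -> derivable_pt g x) by (intros x Hx; apply ex_derive_Reals_0, Hd; lra).
  destruct (Rolle g a b pr) as [c [Pc Hc]]; auto.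
  - intros x Hx. apply continuity_pt_of_ex_derive, Hd, Hx.
  - exists c. split; auto. rewrite <- (Derive_Reals g c (pr c Pc)). exact Hc.
Qed.

Lemma finite_choice (Q : nat -> R -> Prop) m : (forall i, (i <= m)%nat -> exists y, Q i y) ->
  exists w : nat -> R, forall i, (i <= m)%nat -> Q i (w i).
Proof.
  induction m; intros H.
  - destruct (H 0%nat (le_n _)) as [y Hy]. exists (fun _ => y). intros i Hi. now replace i with 0%nat by lia.
  - destruct IHm as [w Hw]; [intros; apply H; lia|].
    destruct (H (S m) (le_n _)) as [y Hy].
    exists (fun i => if Nat.eq_dec i (S m) then y else w i). intros i Hi.
    destruct (Nat.eq_dec i (S m)) as [->|]; auto. apply Hw; lia.
Qed.

Lemma increasing_le (z : nat -> R) n : (forall i, (i < n)%nat -> z i < z (S i)) ->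
  forall i l, (i <= l <= n)%nat -> z i <= z l.
Proof.
  intros H i l [Hil Hl]. induction Hil; [lra|].
  apply Rle_trans with (z m); [apply IHHil; lia | left; apply H; lia].
Qed.

Lemma rolle_chain g : smooth g -> forall j m (z : nat -> R),
  (forall i, (i < m + j)%nat -> z i < z (S i)) -> (forall i, (i <= m + j)%nat -> g (z i) = 0) ->
  exists w, (forall i, (i < m)%nat -> w i < w (S i)) /\
    (forall i, (i <= m)%nat -> z 0%nat <= w i <= z (m + j)%nat /\ Derive_n g j (w i) = 0).
Proof.
  intros Hg j. induction j; intros m z Hz Hz0.
  - exists z. split; [intros i Hi; apply Hz; lia|].
    intros i Hi. split; [split; apply (increasing_le z (m + 0)); auto; lia | apply Hz0; lia].
  - destruct (IHj (S m) z) as [w [Hw1 Hw2]]; [intros i Hi; apply Hz; lia | intros i Hi; apply Hz0; lia|].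
    destruct (finite_choice (fun i c => w i < c < w (S i) /\ Derive (Derive_n g j) c = 0) m) as [w' Hw'].
    { intros i Hi. apply rolle_Derive; [apply Hw1; lia | intros x _; exact (Hg (S j) x)|].
      destruct (Hw2 i ltac:(lia)) as [_ H1]. destruct (Hw2 (S i) ltac:(lia)) as [_ H2]. congruence. }
    exists w'. split.
    + intros i Hi. destruct (Hw' i ltac:(lia)) as [[H1 H2] _]. destruct (Hw' (S i) ltac:(lia)) as [[H3 H4] _]. lra.
    + intros i Hi. destruct (Hw' i Hi) as [[H1 H2] H3]. split; [|exact H3].
      destruct (Hw2 i ltac:(lia)) as [[H4 H5] _]. destruct (Hw2 (S i) ltac:(lia)) as [[H6 H7] _].
      replace (m + S j)%nat with (S m + j)%nat by lia. lra.
Qed.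

Lemma Derive_n_zero_between g n j (z : nat -> R) : smooth g -> (j <= n)%nat ->
  (forall i, (i < n)%nat -> z i < z (S i)) -> (forall i, (i <= n)%nat -> g (z i) = 0) ->
  exists w, z 0%nat <= w <= z n /\ Derive_n g j w = 0.
Proof.
  intros Hg Hjn Hz Hz0.
  destruct (rolle_chain g Hg j (n - j) z) as [w [_ Hw]];
    [intros i Hi; apply Hz; lia | intros i Hi; apply Hz0; lia|].
  destruct (Hw 0%nat ltac:(lia)) as [Hw1 Hw2]. exists (w 0%nat). split; auto.
  replace (n - j + j)%nat with n in Hw1 by lia. exact Hw1.
Qed.

Fixpoint comp_coef (X : R -> R) (j : nat) : nat -> R -> R :=
  match j with
  | O => fun a _ => if Nat.eq_dec a 0 then 1 else 0
  | S j => fun a y =>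
      match a with O => 0 | S a' => Derive X y * comp_coef X j a' y end + Derive (comp_coef X j a) y
  end.

Lemma comp_coef_high X j a y : (j < a)%nat -> comp_coef X j a y = 0.
Proof.
  revert a y. induction j; intros a y Ha; simpl.
  - destruct (Nat.eq_dec a 0); [lia | reflexivity].
  - destruct a as [|a]; [lia|]. rewrite IHj by lia.
    rewrite (Derive_ext (comp_coef X j (S a)) (fun _ => 0)), Derive_const; [ring|].
    intros t. apply IHj. lia.
Qed.

Lemma smooth_on_comp_coef U X : open U -> smooth_on U X -> forall j a, smooth_on U (comp_coef X j a).
Proof.
  intros HU HX. induction j; intros a; simpl; [apply smooth_on_const; auto|].
  apply smooth_on_plus; auto; [|apply smooth_on_Derive; auto].
  destruct a; [apply smooth_on_const; auto|].
  apply smooth_on_mult; auto. apply smooth_on_Derive; auto.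
Qed.

Lemma is_derive_comp_mult (r X c : R -> R) x : ex_derive r (X x) -> ex_derive X x -> ex_derive c x ->
  is_derive (fun y => r (X y) * c y) x (Derive r (X x) * Derive X x * c x + r (X x) * Derive c x).
Proof.
  intros H1 H2 H3.
  assert (Hf := is_derive_comp r X x _ _ (Derive_correct _ _ H1) (Derive_correct _ _ H2)).
  assert (H := is_derive_mult (fun y => r (X y)) c x _ _ Hf (Derive_correct _ _ H3) Rmult_comm).
  eapply is_derive_ext; [intros; reflexivity|].
  replace (Derive r (X x) * Derive X x * c x + r (X x) * Derive c x)
    with (plus (mult (scal (Derive X x) (Derive r (X x))) (c x)) (mult (r (X x)) (Derive c x))); [exact H|].
  unfold plus, mult, scal; simpl; unfold mult; simpl. ring.
Qed.

Lemma Derive_n_comp_expansion U X r : open U -> smooth_on U X -> smooth r ->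
  forall j x, U x ->
    Derive_n (fun y => r (X y)) j x = rsum (S j) (fun a => Derive_n r a (X x) * comp_coef X j a x).
Proof.
  intros HU HX Hr j. induction j; intros x Hx; [simpl; ring|].
  set (c := comp_coef X j).
  change (Derive_n (fun y => r (X y)) (S j) x) with (Derive (Derive_n (fun y => r (X y)) j) x).
  rewrite (Derive_ext_loc _ (fun y => rsum (S j) (fun a => Derive_n r a (X y) * c a y)));
    [|apply (locally_open U); auto].
  erewrite is_derive_unique.
  2:{ apply (is_derive_rsum (S j) (fun a y => Derive_n r a (X y) * c a y)). intros a _.
      apply is_derive_comp_mult; [exact (Hr (S a) (X x)) | apply (smooth_on_ex_derive U X); auto |
        apply (smooth_on_ex_derive U); auto; apply smooth_on_comp_coef; auto]. }
  simpl comp_coef. fold c.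
  assert (Hlast : Derive (c (S j)) x = 0).
  { rewrite (Derive_ext (c (S j)) (fun _ => 0)), Derive_const; auto. intros; apply comp_coef_high; lia. }
  symmetry.
  rewrite (rsum_ext (S (S j)) _ (fun a => Derive_n r a (X x) * match a with O => 0 | S a' => Derive X x * c a' x end
    + Derive_n r a (X x) * Derive (c a) x)) by (intros; ring).
  rewrite rsum_plus, rsum_shift, Rmult_0_r, Rplus_0_l.
  change (rsum (S (S j)) (fun a => Derive_n r a (X x) * Derive (c a) x))
    with (rsum (S j) (fun a => Derive_n r a (X x) * Derive (c a) x) + Derive_n r (S j) (X x) * Derive (c (S j)) x).
  rewrite Hlast, Rmult_0_r, Rplus_0_r, <- rsum_plus. apply rsum_ext. intros. simpl. ring.
Qed.

Lemma Derive_n_defect_close P f g j x M d : smooth P -> smooth f -> smooth g ->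
  (forall a, (a <= j)%nat -> Rabs (comp_coef P j a x) <= M) ->
  (forall a y, (a <= j)%nat -> Rabs (Derive_n f a y - Derive_n g a y) <= d) ->
  Rabs (Derive_n (fun y => f (P y) - f y) j x - Derive_n (fun y => g (P y) - g y) j x)
    <= (INR (S j) * M + 1) * d.
Proof.
  intros HP Hf Hg HM Hd.
  pose proof (@open_true R_UniformSpace) as HT. assert (HPs := smooth_smooth_on (fun _ => True) P HP).
  rewrite !Derive_n_minus by (apply smooth_locally; auto; apply smooth_on_True, smooth_on_comp; auto).
  rewrite (Derive_n_comp_expansion _ P f HT HPs Hf j x I), (Derive_n_comp_expansion _ P g HT HPs Hg j x I).
  replace (rsum (S j) (fun a => Derive_n f a (P x) * comp_coef P j a x) - Derive_n f j x -
    (rsum (S j) (fun a => Derive_n g a (P x) * comp_coef P j a x) - Derive_n g j x))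
    with (rsum (S j) (fun a => (Derive_n f a (P x) - Derive_n g a (P x)) * comp_coef P j a x)
      - (Derive_n f j x - Derive_n g j x)).
  2:{ rewrite (rsum_ext _ _ (fun a => Derive_n f a (P x) * comp_coef P j a x
        + (-1) * (Derive_n g a (P x) * comp_coef P j a x))) by (intros; ring).
      rewrite rsum_plus, rsum_scal. ring. }
  eapply Rle_trans; [apply Rabs_triang|]. rewrite Rabs_Ropp.
  assert (Rabs (rsum (S j) (fun a => (Derive_n f a (P x) - Derive_n g a (P x)) * comp_coef P j a x))
    <= INR (S j) * (d * M)).
  { apply rsum_abs_le. intros a Ha. rewrite Rabs_mult.
    apply Rmult_le_compat; auto using Rabs_pos; [apply Hd | apply HM]; lia. }
  assert (Rabs (Derive_n f j x - Derive_n g j x) <= d) by (apply Hd; lia). nra.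
Qed.

Lemma sin_lipschitz u v : Rabs (sin u - sin v) <= Rabs (u - v).
Proof.
  destruct (MVT_gen sin v u cos) as [c [_ ->]]; [intros; apply is_derive_sin | intros; apply continuity_sin|].
  rewrite Rabs_mult. pose proof (COS_bound c). assert (Rabs (cos c) <= 1) by (apply Rabs_le; lra).
  pose proof (Rabs_pos (u - v)). nra.
Qed.

Lemma cos_lipschitz u v : Rabs (cos u - cos v) <= Rabs (u - v).
Proof. rewrite !cos_sin. eapply Rle_trans; [apply sin_lipschitz | right; f_equal; ring]. Qed.

Section Families.
Variable eps : R.

Definition cont_within (K : R -> R) (t0 : R) : Prop :=
  forall d, 0 < d -> exists h, 0 < h /\ forall t, 0 <= t < eps -> Rabs (t - t0) < h -> Rabs (K t - K t0) < d.

Definition unif_cont_family (G : R -> R -> R) : Prop :=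
  forall t0, 0 <= t0 < eps -> (exists M, forall x, Rabs (G t0 x) <= M) /\
    forall d, 0 < d -> exists h, 0 < h /\ forall t, 0 <= t < eps -> Rabs (t - t0) < h ->
      forall x, Rabs (G t x - G t0 x) < d.

Fixpoint Cn_family (n : nat) (G : R -> R -> R) : Prop :=
  unif_cont_family G /\
  match n with
  | O => True
  | S m => exists G', (forall t x, is_derive (G t) x (G' t x)) /\ Cn_family m G'
  end.

Lemma cont_within_of_cont_at K t0 : cont_at K t0 -> cont_within K t0.
Proof. intros H d Hd. destruct (H d Hd) as [h [Hh H']]. exists h. split; auto. Qed.

Lemma cont_within_const c t0 : cont_within (fun _ => c) t0.
Proof. intros d Hd. exists 1. split; [lra|]. intros. rewrite Rminus_diag, Rabs_R0. auto. Qed.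

Lemma unif_cont_family_plus G H : unif_cont_family G -> unif_cont_family H ->
  unif_cont_family (fun t x => G t x + H t x).
Proof.
  intros HG HH t0 Ht0. destruct (HG t0 Ht0) as [[M1 HM1] HG2]. destruct (HH t0 Ht0) as [[M2 HM2] HH2].
  split.
  - exists (M1 + M2). intros x. eapply Rle_trans; [apply Rabs_triang|]. pose proof (HM1 x); pose proof (HM2 x); lra.
  - intros d Hd. destruct (HG2 (d/2)) as [h1 [Hh1 H1]]; [lra|]. destruct (HH2 (d/2)) as [h2 [Hh2 H2]]; [lra|].
    exists (Rmin h1 h2). split; [apply Rmin_pos; auto|]. intros t Ht Htt x.
    pose proof (Rmin_l h1 h2). pose proof (Rmin_r h1 h2).
    specialize (H1 t Ht ltac:(lra) x). specialize (H2 t Ht ltac:(lra) x).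
    replace (G t x + H t x - (G t0 x + H t0 x)) with ((G t x - G t0 x) + (H t x - H t0 x)) by ring.
    eapply Rle_lt_trans; [apply Rabs_triang | lra].
Qed.

Lemma unif_cont_family_mult G H : unif_cont_family G -> unif_cont_family H ->
  unif_cont_family (fun t x => G t x * H t x).
Proof.
  intros HG HH t0 Ht0. destruct (HG t0 Ht0) as [[M1 HM1] HG2]. destruct (HH t0 Ht0) as [[M2 HM2] HH2].
  assert (HM1' : forall x, Rabs (G t0 x) <= Rabs M1) by (intros x; pose proof (HM1 x); pose proof (Rle_abs M1); lra).
  assert (HM2' : forall x, Rabs (H t0 x) <= Rabs M2) by (intros x; pose proof (HM2 x); pose proof (Rle_abs M2); lra).
  split.
  - exists (Rabs M1 * Rabs M2). intros x. rewrite Rabs_mult. apply Rmult_le_compat; auto using Rabs_pos.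
  - intros d Hd. set (S := Rabs M1 + Rabs M2 + 2).
    assert (HS : 0 < S) by (unfold S; pose proof (Rabs_pos M1); pose proof (Rabs_pos M2); lra).
    set (d1 := Rmin 1 (d / S)).
    assert (Hd1 : 0 < d1) by (apply Rmin_pos; [lra | apply Rdiv_lt_0_compat; lra]).
    assert (Hd1' : d1 <= 1 /\ d1 <= d / S) by (split; [apply Rmin_l | apply Rmin_r]).
    destruct (HG2 d1 Hd1) as [h1 [Hh1 H1]]. destruct (HH2 d1 Hd1) as [h2 [Hh2 H2]].
    exists (Rmin h1 h2). split; [apply Rmin_pos; auto|]. intros t Ht Htt x.
    pose proof (Rmin_l h1 h2). pose proof (Rmin_r h1 h2).
    specialize (H1 t Ht ltac:(lra) x). specialize (H2 t Ht ltac:(lra) x).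
    pose proof (HM1' x). pose proof (HM2' x).
    replace (G t x * H t x - G t0 x * H t0 x) with ((G t x - G t0 x) * (H t x - H t0 x)
      + (G t x - G t0 x) * H t0 x + G t0 x * (H t x - H t0 x)) by ring.
    assert (Rabs ((G t x - G t0 x) * (H t x - H t0 x)) <= d1 * d1)
      by (rewrite Rabs_mult; apply Rmult_le_compat; auto using Rabs_pos; lra).
    assert (Rabs ((G t x - G t0 x) * H t0 x) <= d1 * Rabs M2)
      by (rewrite Rabs_mult; apply Rmult_le_compat; auto using Rabs_pos; lra).
    assert (Rabs (G t0 x * (H t x - H t0 x)) <= Rabs M1 * d1)
      by (rewrite Rabs_mult; apply Rmult_le_compat; auto using Rabs_pos; lra).
    assert (d1 * S <= d) by (apply Rle_trans with (d / S * S); [apply Rmult_le_compat_r; lra | right; field; lra]).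
    assert (d1 * d1 <= d1) by nra.
    eapply Rle_lt_trans; [apply Rabs_triang|].
    eapply Rle_lt_trans; [apply Rplus_le_compat_r, Rabs_triang|]. unfold S in *. nra.
Qed.

Lemma Cn_family_ext n G H : (forall t x, G t x = H t x) -> Cn_family n G -> Cn_family n H.
Proof.
  intros E. replace H with G; auto.
  apply functional_extensionality; intros t. apply functional_extensionality; intros x. apply E.
Qed.

Lemma Cn_family_unif n G : Cn_family n G -> unif_cont_family G.
Proof. destruct n; simpl; tauto. Qed.

Lemma Cn_family_S n G : Cn_family (S n) G -> Cn_family n G.
Proof.
  revert G. induction n; intros G H; simpl in *; [tauto|].
  destruct H as [H1 [G' [H2 H3]]]. split; auto. exists G'. split; auto.
Qed.

Lemma Cn_family_plus n : forall G H, Cn_family n G -> Cn_family n H -> Cn_family n (fun t x => G t x + H t x).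
Proof.
  induction n; intros G H HG HH; [split; [apply unif_cont_family_plus; apply HG || apply HH | exact I]|].
  destruct HG as [HG1 [G' [HG2 HG3]]]. destruct HH as [HH1 [H' [HH2 HH3]]].
  split; [apply unif_cont_family_plus; auto|]. exists (fun t x => G' t x + H' t x). split.
  - intros t x. apply is_derive_Rplus; auto.
  - apply IHn; auto.
Qed.

Lemma Cn_family_mult n : forall G H, Cn_family n G -> Cn_family n H -> Cn_family n (fun t x => G t x * H t x).
Proof.
  induction n; intros G H HG HH; [split; [apply unif_cont_family_mult; apply HG || apply HH | exact I]|].
  assert (HGw := Cn_family_S _ _ HG). assert (HHw := Cn_family_S _ _ HH).
  destruct HG as [HG1 [G' [HG2 HG3]]]. destruct HH as [HH1 [H' [HH2 HH3]]].
  split; [apply unif_cont_family_mult; auto|]. exists (fun t x => G' t x * H t x + G t x * H' t x). split.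
  - intros t x. exact (is_derive_mult (G t) (H t) x _ _ (HG2 t x) (HH2 t x) Rmult_comm).
  - apply Cn_family_plus; apply IHn; auto.
Qed.

Lemma Cn_family_const n : forall K, (forall t0, 0 <= t0 < eps -> cont_within K t0) -> Cn_family n (fun t _ => K t).
Proof.
  induction n; intros K HK.
  - split; [|exact I]. intros t0 Ht0. split; [exists (Rabs (K t0)); intros; lra|].
    intros d Hd. destruct (HK t0 Ht0 d Hd) as [h [Hh H]]. exists h. split; auto.
  - split; [exact (Cn_family_unif _ _ (IHn K HK))|]. exists (fun _ _ => 0). split.
    + intros t x. exact (is_derive_const _ _).
    + apply (IHn (fun _ => 0)). intros; apply cont_within_const.
Qed.

Lemma Cn_family_sin_shift n a : (forall t0, 0 <= t0 < eps -> cont_within a t0) ->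
  forall c, Cn_family n (fun t x => sin (x - a t + c)).
Proof.
  intros Ha. induction n; intros c.
  - split; [|exact I]. intros t0 Ht0. split; [exists 1; intros x; apply Rabs_le, SIN_bound|].
    intros d Hd. destruct (Ha t0 Ht0 d Hd) as [h [Hh H]]. exists h. split; auto.
    intros t Ht Htt x. eapply Rle_lt_trans; [apply sin_lipschitz|].
    replace (x - a t + c - (x - a t0 + c)) with (- (a t - a t0)) by ring. rewrite Rabs_Ropp. auto.
  - split; [exact (Cn_family_unif _ _ (IHn c))|].
    exists (fun t x => sin (x - a t + (c + PI / 2))). split; [|apply IHn].
    intros t x. auto_derive; [exact I|]. rewrite Rmult_1_l, cos_sin. f_equal. ring.
Qed.

Lemma Cn_family_rsum n N G : (forall i, (i < N)%nat -> Cn_family n (G i)) ->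
  Cn_family n (fun t x => rsum N (fun i => G i t x)).
Proof.
  induction N; intros H; simpl; [apply (Cn_family_const n (fun _ => 0)); intros; apply cont_within_const|].
  apply (Cn_family_plus n (fun t x => rsum N (fun i => G i t x)) (G N)); [apply IHN; intros|]; apply H; lia.
Qed.

Lemma Cn_family_rprod n N G : (forall i, (i < N)%nat -> Cn_family n (G i)) ->
  Cn_family n (fun t x => rprod N (fun i => G i t x)).
Proof.
  induction N; intros H; simpl; [apply (Cn_family_const n (fun _ => 1)); intros; apply cont_within_const|].
  apply (Cn_family_mult n (fun t x => rprod N (fun i => G i t x)) (G N)); [apply IHN; intros|]; apply H; lia.
Qed.

Lemma Cn_family_Derive_n n : forall G, Cn_family n G -> forall j, (j <= n)%nat ->
  (forall t x, ex_derive_n (G t) j x) /\ unif_cont_family (fun t x => Derive_n (G t) j x).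
Proof.
  induction n; intros G HG j Hj.
  - replace j with 0%nat by lia. split; [intros; exact I | exact (proj1 HG)].
  - destruct j as [|j]; [split; [intros; exact I | exact (proj1 HG)]|].
    destruct HG as [HG1 [G' [HG2 HG3]]].
    assert (ED : forall t, Derive (G t) = G' t)
      by (intros t; apply functional_extensionality; intros x; apply is_derive_unique, HG2).
    destruct (IHn G' HG3 j ltac:(lia)) as [IH1 IH2]. split.
    + intros t x. destruct j as [|j]; [exists (G' t x); apply HG2|].
      apply (proj2 (ex_derive_n_SS (G t) j x)). rewrite ED. apply IH1.
    + replace (fun t x => Derive_n (G t) (S j) x) with (fun t x => Derive_n (G' t) j x); [exact IH2|].
      apply functional_extensionality; intros t. apply functional_extensionality; intros x.
      now rewrite Derive_n_S, ED.
Qed.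

End Families.

Lemma PI_gt_3 : 3 < PI.
Proof. pose proof PI2_3_2. lra. Qed.

Lemma eqS1_cos x y : eqS1 x y -> cos (x - y) = 1.
Proof.
  intros [z ->]. replace (2 * PI * IZR z) with (2 * (IZR z * PI)) by ring.
  rewrite cos_2a_sin, sin_eq_0_1; [ring | now exists z].
Qed.

Lemma eqS1_of_cos x y : cos (x - y) = 1 -> eqS1 x y.
Proof.
  intros H. assert (Hs : sin ((x - y) / 2) = 0).
  { pose proof (cos_2a_sin ((x - y) / 2)) as E. replace (2 * ((x - y) / 2)) with (x - y) in E by field. nra. }
  destruct (sin_eq_0_0 _ Hs) as [z Hz]. exists z. lra.
Qed.

Lemma not_eqS1_near x y : 0 < Rabs (x - y) < 2 * PI -> ~ eqS1 x y.
Proof.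
  intros Hw [z Hz]. rewrite Hz, Rabs_mult, (Rabs_right (2 * PI)) in Hw by (pose proof PI_gt_3; lra).
  assert (Hz0 : z <> 0%Z) by (intros ->; rewrite Rabs_R0 in Hw; lra).
  assert (1 <= Rabs (IZR z)).
  { destruct (Z_le_gt_dec 1 z) as [Hp|Hn].
    - apply IZR_le in Hp. rewrite Rabs_right; lra.
    - assert (Hn' : (z <= -1)%Z) by lia. apply IZR_le in Hn'. rewrite Rabs_left; lra. }
  pose proof PI_gt_3. nra.
Qed.

Lemma sin_abs_lb w : Rabs w <= 1 -> Rabs w / 2 <= Rabs (sin w).
Proof.
  assert (Hlb : forall a, 0 <= a <= 1 -> a / 2 <= sin a).
  { intros a Ha. pose proof PI_gt_3. destruct (SIN a) as [H1 _]; try lra.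
    unfold sin_lb, sin_approx, sin_term in H1. simpl in H1.
    assert (0 <= a * a <= 1) by nra. assert (0 <= a * (a * a) <= a) by nra.
    assert (0 <= a * (a * (a * (a * a)))) by nra. assert (a * (a * (a * (a * (a * (a * a))))) <= a) by nra.
    lra. }
  intros Hw. destruct (Rle_dec 0 w).
  - rewrite Rabs_right in * by lra. pose proof (Hlb w ltac:(lra)). rewrite Rabs_right; lra.
  - rewrite Rabs_left in * by lra. rewrite <- Rabs_Ropp, <- sin_neg.
    pose proof (Hlb (- w) ltac:(lra)). rewrite Rabs_right; lra.
Qed.

Lemma sin_plus_2PI x : sin (x + 2 * PI) = sin x.
Proof. replace (x + 2 * PI) with (x + 2 * INR 1 * PI) by (simpl; ring). apply sin_period. Qed.

Lemma cos_plus_2PI x : cos (x + 2 * PI) = cos x.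
Proof. replace (x + 2 * PI) with (x + 2 * INR 1 * PI) by (simpl; ring). apply cos_period. Qed.

Lemma smooth_sin_cos : smooth sin /\ smooth cos.
Proof.
  assert (H : forall n, C_on (fun _ => True) n sin /\ C_on (fun _ => True) n cos).
  { induction n as [|n [Hs Hc]]; [split; apply C_on_0|]. split; apply C_on_S; split.
    - intros x _. exists (cos x). apply is_derive_sin.
    - apply C_on_ext with cos; [apply open_true | | exact Hc].
      intros y _. symmetry. apply is_derive_unique, is_derive_sin.
    - intros x _. exists (- sin x). apply is_derive_cos.
    - apply C_on_ext with (fun y => (-1) * sin y); [apply open_true | |].
      + intros y _. symmetry. replace (-1 * sin y) with (- sin y) by ring. apply is_derive_unique, is_derive_cos.
      + apply C_on_mult; [apply open_true | apply C_on_const, open_true | exact Hs]. }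
  split; apply smooth_on_True; intros n; apply H.
Qed.

(** * The curve of configurations *)

Definition xpt (A t : R) (i : nat) : R := A + INR (S i) * t.

Lemma xpt_bounds A t i k : (i < k)%nat -> 0 <= t -> 0 <= xpt A t i - A <= INR k * t.
Proof.
  intros Hi Ht. unfold xpt. assert (INR (S i) <= INR k) by (apply le_INR; lia).
  pose proof (pos_INR (S i)). split; nra.
Qed.

Lemma INR_S_sep i l : i <> l -> 1 <= Rabs (INR (S i) - INR (S l)).
Proof.
  intros H. destruct (Nat.lt_gt_cases i l) as [[Hl|Hl] _]; auto.
  - assert (INR (S i) <= INR l) by (apply le_INR; lia). rewrite (S_INR l), Rabs_left; lra.
  - assert (INR (S l) <= INR i) by (apply le_INR; lia). rewrite (S_INR i), Rabs_right; lra.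
Qed.

Lemma xpt_sep A t i l k : 0 < t -> (i < k)%nat -> (l < k)%nat -> i <> l ->
  t <= Rabs (xpt A t i - xpt A t l) <= INR k * t.
Proof.
  intros Ht Hi Hl Hil. unfold xpt.
  replace (A + INR (S i) * t - (A + INR (S l) * t)) with ((INR (S i) - INR (S l)) * t) by ring.
  rewrite Rabs_mult, (Rabs_right t) by lra. pose proof (INR_S_sep i l Hil).
  assert (INR (S i) <= INR k) by (apply le_INR; lia). assert (INR (S l) <= INR k) by (apply le_INR; lia).
  pose proof (pos_INR (S i)). pose proof (pos_INR (S l)).
  assert (Rabs (INR (S i) - INR (S l)) <= INR k) by (apply Rabs_le; lra). split; nra.
Qed.

Lemma algebraic_on_poly eps g (q : nat -> R) n : (forall t, g t = sum_f_R0 (fun m => q m * t ^ m) n) ->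
  algebraic_on eps g.
Proof.
  intros Hq.
  exists (S (S n)), (fun a b => match b with
    | O => if le_dec a n then - q a else 0
    | 1%nat => if Nat.eq_dec a 0 then 1 else 0
    | _ => 0 end).
  split; [exists 0%nat, 1%nat; repeat split; [lia | lia | simpl; lra]|].
  intros t _.
  rewrite (rsum_ext (S (S n)) _ (fun a => (if le_dec a n then - q a else 0) * t ^ a
    + (if Nat.eq_dec a 0 then 1 else 0) * t ^ a * g t)).
  2:{ intros a Ha. rewrite !rsum_shift, rsum_eq0; [simpl; ring|]. intros i _. simpl. ring. }
  rewrite rsum_plus, (rsum_eq1 (S (S n)) (fun a => (if Nat.eq_dec a 0 then 1 else 0) * t ^ a * g t) 0%nat);
    [|lia|].
  2:{ intros l _ Hl0. cbv beta. destruct (Nat.eq_dec l 0); [lia | ring]. }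
  change (rsum (S (S n)) (fun a => (if le_dec a n then - q a else 0) * t ^ a)) with
    (rsum (S n) (fun a => (if le_dec a n then - q a else 0) * t ^ a)
      + (if le_dec (S n) n then - q (S n) else 0) * t ^ S n).
  destruct (le_dec (S n) n); [lia|].
  rewrite (rsum_ext (S n) _ (fun a => (-1) * (q a * t ^ a))).
  2:{ intros a Ha. destruct (le_dec a n); [ring | lia]. }
  rewrite rsum_scal, rsum_sum_f_R0, <- Hq. simpl. ring.
Qed.

Lemma cont_on_Ico_of_cont_at eps g : (forall t, cont_at g t) -> cont_on_Ico eps g.
Proof. intros H t0 _ d Hd. destruct (H t0 d Hd) as [h [Hh H']]. exists h. split; auto. Qed.

Section Germ.
Variables (D : R -> R) (A B : R) (k : nat).
Hypothesis Hk : (1 <= k)%nat.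
Hypothesis HD : local_diffeo_germ D A B.

Local Notation P := (taylor_poly D A (k - 1)).

Lemma germ_smooth_near : exists r, 0 < r /\ smooth_on (Rball A r) D.
Proof.
  destruct HD as [_ [r [_ [_ [Hr [_ [HDs _]]]]]]]. exists r. split; auto.
  intros n x Hx m _. apply HDs, Hx.
Qed.

Lemma taylor_poly_germ_center : P A = B.
Proof. rewrite taylor_poly_center. apply HD. Qed.

(* Differentiating [G (D x) = x] at [A]. *)
Lemma Derive_germ_neq0 : Derive D A <> 0.
Proof.
  destruct HD as [HDA [r [s [G [Hr [Hs [HDs [HGs [H1 _]]]]]]]]].
  assert (Hc0 : forall c, 0 < c -> Rabs (A - A) < c) by (intros; rewrite Rminus_diag, Rabs_R0; auto).
  assert (HexD : ex_derive D A) by exact (HDs A (Hc0 r Hr) 1%nat).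
  assert (HexG : ex_derive G (D A)) by (rewrite HDA; exact (HGs B ltac:(rewrite Rminus_diag, Rabs_R0; auto) 1%nat)).
  assert (Hc := is_derive_comp G D A _ _ (Derive_correct _ _ HexG) (Derive_correct _ _ HexD)).
  assert (Hid : is_derive (fun x => G (D x)) A 1).
  { apply is_derive_ext_loc with (fun x => x); [|exact (is_derive_id _)].
    exists (mkposreal r Hr). intros y Hy. symmetry. apply H1, Hy. }
  pose proof (is_derive_unique _ _ _ Hc) as E1. rewrite (is_derive_unique _ _ _ Hid) in E1.
  unfold scal in E1; simpl in E1; unfold mult in E1; simpl in E1.
  intros HD0. rewrite HD0 in E1. lra.
Qed.

Lemma defect_D_P_bound f : smooth f ->
  exists C d, 0 < d /\ forall x, A < x < A + d -> Rabs (f (D x) - f (P x)) <= C * (x - A) ^ k.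
Proof.
  intros Hf. destruct germ_smooth_near as [r [Hr HDs]].
  destruct (taylor_remainder_bound D A r (k - 1) Hr HDs) as [M [dT [HdT HT]]].
  replace (S (k - 1)) with k in HT by lia.
  destruct (cont_at_bounded (Derive f) B) as [df [Hdf Hfb]]; [apply cont_at_of_ex_derive; exact (Hf 2%nat B)|].
  destruct (cont_at_of_ex_derive D A (smooth_on_ex_derive _ D A HDs (Rball_center A r Hr)) df Hdf)
    as [d1 [Hd1 HD1]].
  destruct (cont_at_of_ex_derive P A (smooth_taylor_poly D A (k - 1) 1%nat A) df Hdf) as [d2 [Hd2 HP2]].
  rewrite taylor_poly_germ_center in HP2. rewrite (proj1 HD) in HD1.
  exists ((Rabs (Derive f B) + 1) * M), (Rmin (Rmin dT r) (Rmin d1 d2)).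
  split; [repeat apply Rmin_pos; auto|]. intros x Hx.
  pose proof (Rmin_l (Rmin dT r) (Rmin d1 d2)). pose proof (Rmin_r (Rmin dT r) (Rmin d1 d2)).
  pose proof (Rmin_l dT r). pose proof (Rmin_l d1 d2). pose proof (Rmin_r d1 d2).
  assert (Hxa : Rabs (x - A) < Rmin (Rmin dT r) (Rmin d1 d2)) by (rewrite Rabs_right; lra).
  assert (HDx : Rabs (D x - B) < df) by (apply HD1; lra).
  assert (HPx : Rabs (P x - B) < df) by (apply HP2; lra).
  eapply Rle_trans; [apply (lipschitz_of_derive_bound f (P x) (D x) (Rabs (Derive f B) + 1))|].
  - intros z Hz. split; [exact (Hf 1%nat z)|]. apply Hfb.
    apply Rabs_lt_between in HDx, HPx. apply Rabs_def1;
      [pose proof (Rmax_lub_lt (P x) (D x) (B + df) ltac:(lra) ltac:(lra))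
      | pose proof (Rmin_glb_lt (P x) (D x) (B - df) ltac:(lra) ltac:(lra))]; lra.
  - rewrite Rmult_assoc. apply Rmult_le_compat_l; [pose proof (Rabs_pos (Derive f B)); lra|].
    apply HT. lra.
Qed.

Lemma jets_agree_iff_defect_bound f : smooth f ->
  (forall j, (j < k)%nat -> Derive_n f j A = Derive_n (fun x => f (D x)) j A) <->
  exists C d, 0 < d /\ forall x, A < x < A + d -> Rabs (f (P x) - f x) <= C * (x - A) ^ k.
Proof.
  intros Hf. destruct (defect_D_P_bound f Hf) as [C1 [d1 [Hd1 HC1]]].
  destruct germ_smooth_near as [r [Hr HDs]].
  assert (Hb : open (Rball A r)) by apply open_Rball.
  assert (Hh : smooth_on (Rball A r) (fun y => f (D y) - f y)).
  { apply smooth_on_minus; auto; [apply smooth_on_comp | apply smooth_smooth_on]; auto. }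
  assert (Em : forall j, Derive_n (fun y => f (D y) - f y) j A = Derive_n (fun y => f (D y)) j A - Derive_n f j A).
  { intros j. apply Derive_n_minus; [|apply smooth_locally; auto].
    apply (smooth_on_locally _ Hb); [apply smooth_on_comp | apply Rball_center]; auto. }
  split.
  - intros Hj. destruct (flat_bound _ A r k Hk Hr Hh) as [C0 [d0 [Hd0 HC0]]].
    { intros j Hjk. rewrite Em, Hj; auto. ring. }
    exists (C1 + C0), (Rmin d0 d1). split; [apply Rmin_pos; auto|]. intros x Hx.
    pose proof (Rmin_l d0 d1). pose proof (Rmin_r d0 d1).
    replace (f (P x) - f x) with (- (f (D x) - f (P x)) + (f (D x) - f x)) by ring.
    eapply Rle_trans; [apply Rabs_triang|]. rewrite Rabs_Ropp, Rmult_plus_distr_r.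
    apply Rplus_le_compat; [apply HC1 | apply HC0]; lra.
  - intros [C0 [d0 [Hd0 HC0]]] j Hj.
    assert (E : Derive_n (fun y => f (D y) - f y) j A = 0).
    { apply (flat_of_bound _ A r k (C1 + C0) (Rmin d0 d1) Hr (Rmin_pos _ _ Hd0 Hd1) Hh); auto.
      intros x Hx. pose proof (Rmin_l d0 d1). pose proof (Rmin_r d0 d1).
      replace (f (D x) - f x) with ((f (D x) - f (P x)) + (f (P x) - f x)) by ring.
      eapply Rle_trans; [apply Rabs_triang|]. rewrite Rmult_plus_distr_r.
      apply Rplus_le_compat; [apply HC1 | apply HC0]; lra. }
    rewrite Em in E. lra.
Qed.

Lemma taylor_poly_germ_near_B e : 0 < e -> exists d, 0 < d /\ forall x, Rabs (x - A) < d -> Rabs (P x - B) < e.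
Proof.
  intros He. destruct (cont_at_of_ex_derive P A (smooth_taylor_poly D A (k - 1) 1%nat A) e He) as [d [Hd H]].
  rewrite taylor_poly_germ_center in H. exists d. split; auto.
Qed.

Lemma separation_near : ~ eqS1 A B -> exists d c0, 0 < d /\ 0 < c0 /\
  forall x y, Rabs (x - A) < d -> Rabs (y - A) < d -> c0 <= 1 - cos (x - P y).
Proof.
  intros HAB. set (c := 1 - cos (A - B)).
  assert (Hc : 0 < c).
  { unfold c. pose proof (COS_bound (A - B)). destruct (Req_dec (cos (A - B)) 1) as [E|]; [|lra].
    exfalso. apply HAB, eqS1_of_cos, E. }
  destruct (taylor_poly_germ_near_B (c / 4)) as [d [Hd HP]]; [lra|].
  exists (Rmin d (c / 4)), (c / 2). split; [apply Rmin_pos; lra|]. split; [lra|].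
  intros x y Hx Hy. pose proof (Rmin_l d (c / 4)). pose proof (Rmin_r d (c / 4)).
  specialize (HP y ltac:(lra)).
  assert (Rabs ((x - P y) - (A - B)) < c / 2).
  { replace ((x - P y) - (A - B)) with ((x - A) - (P y - B)) by ring.
    eapply Rle_lt_trans; [apply Rabs_triang|]. rewrite Rabs_Ropp. lra. }
  pose proof (cos_lipschitz (x - P y) (A - B)).
  pose proof (Rle_abs (cos (x - P y) - cos (A - B))). unfold c in *. lra.
Qed.

Lemma taylor_poly_germ_injective_near : exists d, 0 < d /\ ((2 <= k)%nat ->
  forall x y, Rabs (x - A) < d -> Rabs (y - A) < d -> x <> y -> ~ eqS1 (P x) (P y)).
Proof.
  destruct (le_lt_dec 2 k) as [Hk2|]; [|exists 1; split; [lra | intros; lia]].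
  assert (HdP : Derive P A = Derive D A)
    by (apply is_derive_unique, taylor_poly_derive_center; lia).
  destruct (lower_lipschitz_near P A (smooth_taylor_poly D A (k - 1))) as [d1 [Hd1 HL]];
    [rewrite HdP; apply Derive_germ_neq0|].
  destruct (taylor_poly_germ_near_B 1) as [d2 [Hd2 HB]]; [lra|].
  exists (Rmin d1 d2). split; [apply Rmin_pos; auto|]. intros _ x y Hx Hy Hxy.
  pose proof (Rmin_l d1 d2). pose proof (Rmin_r d1 d2).
  apply not_eqS1_near. split.
  - assert (0 < Rabs (Derive P A)) by (rewrite HdP; apply Rabs_pos_lt, Derive_germ_neq0).
    assert (0 < Rabs (x - y)) by (apply Rabs_pos_lt; lra).
    pose proof (HL x y ltac:(lra) ltac:(lra)). nra.
  - replace (P x - P y) with ((P x - B) - (P y - B)) by ring.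
    eapply Rle_lt_trans; [apply Rabs_triang|]. rewrite Rabs_Ropp.
    pose proof (HB x ltac:(lra)). pose proof (HB y ltac:(lra)). pose proof PI_gt_3. lra.
Qed.

(* Coordinates [2 i] and [2 i + 1] are [x_i = A + (i+1) t] and [P x_i]. *)
Definition conf_curve (t : R) (n : nat) : R :=
  if Nat.even n then xpt A t (Nat.div2 n) else P (xpt A t (Nat.div2 n)).

Lemma conf_curve_even t i : conf_curve t (2 * i) = xpt A t i.
Proof. unfold conf_curve. now rewrite Nat.even_mul, Nat.div2_double. Qed.

Lemma conf_curve_odd t i : conf_curve t (2 * i + 1) = P (xpt A t i).
Proof.
  unfold conf_curve. rewrite Nat.add_1_r, Nat.even_succ, <- Nat.negb_even, Nat.even_mul, Nat.div2_succ_double.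
  reflexivity.
Qed.

Lemma alg_curve_germ_conf_curve eps : 0 < eps -> alg_curve_germ k eps conf_curve.
Proof.
  intros He. split; auto. intros i _. unfold conf_curve. destruct (Nat.even i); split.
  - apply cont_on_Ico_of_cont_at. intros t. apply cont_at_of_ex_derive. unfold xpt. auto_derive. exact I.
  - apply (algebraic_on_poly _ _ (fun m => match m with O => A | 1%nat => INR (S (Nat.div2 i)) | _ => 0 end) 1).
    intros t. unfold xpt. simpl. ring.
  - apply cont_on_Ico_of_cont_at. intros t. apply cont_at_of_ex_derive.
    apply (ex_derive_comp P (fun t => xpt A t (Nat.div2 i))); [exact (smooth_taylor_poly D A (k - 1) 1%nat _)|].
    unfold xpt. auto_derive. exact I.
  - apply (algebraic_on_poly _ _ (fun m => INR (S (Nat.div2 i)) ^ m / INR (fact m) * Derive_n D m A) (k - 1)).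
    intros t. unfold taylor_poly. apply sum_eq. intros m _. unfold xpt.
    replace (A + INR (S (Nat.div2 i)) * t - A) with (INR (S (Nat.div2 i)) * t) by ring.
    rewrite Rpow_mult_distr. unfold Rdiv. ring.
Qed.

Lemma in_config_conf_curve t d1 c0 d2 : 0 < t -> INR k * t <= 1 -> INR k * t < d1 -> INR k * t < d2 ->
  (forall x y, Rabs (x - A) < d1 -> Rabs (y - A) < d1 -> c0 <= 1 - cos (x - P y)) -> 0 < c0 ->
  ((2 <= k)%nat -> forall x y, Rabs (x - A) < d2 -> Rabs (y - A) < d2 -> x <> y -> ~ eqS1 (P x) (P y)) ->
  in_config k (conf_curve t).
Proof.
  intros Ht Hk1 Hd1 Hd2 Hsep Hc0 Hinj i j Hi Hj Hij.
  assert (Hdiv : forall n, (n < 2 * k)%nat -> (Nat.div2 n < k)%nat).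
  { intros n Hn. pose proof (Nat.div2_odd n). destruct (Nat.odd n); simpl in *; lia. }
  assert (Hpar : Nat.even i = Nat.even j -> Nat.div2 i <> Nat.div2 j).
  { intros E1 E2. apply Hij. rewrite (Nat.div2_odd i), (Nat.div2_odd j), <- !Nat.negb_even, E1, E2. reflexivity. }
  assert (Hnear : forall n, (n < k)%nat -> Rabs (xpt A t n - A) <= INR k * t).
  { intros n Hn. destruct (xpt_bounds A t n k Hn ltac:(lra)). rewrite Rabs_right; lra. }
  pose proof (Hdiv i Hi) as Hi'. pose proof (Hdiv j Hj) as Hj'.
  pose proof (Hnear _ Hi') as Hxi. pose proof (Hnear _ Hj') as Hxj.
  assert (Hcos : forall a b, (a < k)%nat -> (b < k)%nat -> ~ eqS1 (xpt A t a) (P (xpt A t b))).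
  { intros a b Ha Hb HE. apply eqS1_cos in HE.
    pose proof (Hsep _ _ (Rle_lt_trans _ _ _ (Hnear a Ha) Hd1) (Rle_lt_trans _ _ _ (Hnear b Hb) Hd1)). lra. }
  unfold conf_curve. destruct (Nat.even i) eqn:Ei, (Nat.even j) eqn:Ej.
  - apply not_eqS1_near. pose proof (xpt_sep A t _ _ k Ht Hi' Hj' (Hpar ltac:(congruence))).
    pose proof PI_gt_3. split; lra.
  - apply Hcos; auto.
  - intros [z Hz]. apply (Hcos (Nat.div2 j) (Nat.div2 i)); auto. exists (- z)%Z. rewrite opp_IZR. lra.
  - assert (Hab := Hpar ltac:(congruence)). pose proof (xpt_sep A t _ _ k Ht Hi' Hj' Hab) as Hsepx.
    assert (Hk2 : forall a b, (a < k)%nat -> (b < k)%nat -> a <> b -> (2 <= k)%nat) by (intros; lia).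
    apply Hinj; [exact (Hk2 _ _ Hi' Hj' Hab) | lra | lra |]. intros E. rewrite E, Rminus_diag, Rabs_R0 in Hsepx. lra.
Qed.

(** * Limits along the curve satisfy the jet condition *)

Lemma smooth_defect G : smooth G -> smooth (fun y => G (P y) - G y).
Proof.
  intros HG. pose proof (@open_true R_UniformSpace) as HT. apply smooth_on_True, smooth_on_minus; auto.
  - apply smooth_on_comp; auto. apply smooth_smooth_on, smooth_taylor_poly.
  - apply smooth_smooth_on, HG.
Qed.

(* Rolle's theorem along the [k] points [x_i], where [G (P x) - G x] vanishes. *)
Lemma Derive_n_defect_zero_near t G j : 0 < t -> alg_of_config k (conf_curve t) G -> (j < k)%nat ->
  exists xi, Rabs (xi - A) <= INR k * t /\ Derive_n (fun y => G (P y) - G y) j xi = 0.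
Proof.
  intros Ht [[HG _] HGc] Hj.
  destruct (Derive_n_zero_between (fun y => G (P y) - G y) (k - 1) j (xpt A t)) as [xi [Hxi Hz]].
  - apply smooth_defect, HG.
  - lia.
  - intros i _. unfold xpt. rewrite (S_INR (S i)). nra.
  - intros i Hi. specialize (HGc i ltac:(lia)). rewrite conf_curve_even, conf_curve_odd in HGc. lra.
  - exists xi. split; auto. destruct (xpt_bounds A t 0 k ltac:(lia) ltac:(lra)).
    destruct (xpt_bounds A t (k - 1) k ltac:(lia) ltac:(lra)). rewrite Rabs_right; lra.
Qed.

Lemma Derive_n_defect_vanish_of_limit eps F f :
  0 < eps -> F 0 = f -> smooth f ->
  (forall t, 0 < t < eps -> alg_of_config k (conf_curve t) (F t)) ->
  Cm_continuous_family (2 * k) eps F ->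
  forall j, (j < k)%nat -> Derive_n (fun y => f (P y) - f y) j A = 0.
Proof.
  intros Heps HF0 Hf Halg HCm j Hj.
  assert (HP := smooth_taylor_poly D A (k - 1)).
  destruct (bounded_near_finite (comp_coef P j) A j) as [dc [M [Hdc [HM0 HM]]]].
  { intros a _. apply cont_at_of_ex_derive. apply (smooth_on_ex_derive (fun _ => True)); [|exact I].
    apply smooth_on_comp_coef; [exact open_true | apply smooth_smooth_on, HP]. }
  apply eq0_of_approx; [apply cont_at_of_ex_derive; exact (smooth_defect f Hf (S j) A)|].
  intros e He.
  set (d := e / (INR (S j) * M + 1)).
  assert (Hd : 0 < d) by (unfold d; pose proof (pos_INR (S j)); apply Rdiv_lt_0_compat; nra).
  destruct (HCm 0 ltac:(lra) d Hd) as [h0 [Hh0 HC]].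
  assert (HkR : 1 <= INR k) by (apply (le_INR 1); auto).
  set (t := Rmin (Rmin eps h0) (Rmin (e / INR k) (dc / INR k)) / 2).
  assert (Ht : 0 < t < eps /\ t < h0 /\ INR k * t < e /\ INR k * t < dc).
  { assert (0 < e / INR k) by (apply Rdiv_lt_0_compat; lra).
    assert (0 < dc / INR k) by (apply Rdiv_lt_0_compat; lra).
    pose proof (Rmin_l (Rmin eps h0) (Rmin (e / INR k) (dc / INR k))).
    pose proof (Rmin_r (Rmin eps h0) (Rmin (e / INR k) (dc / INR k))).
    pose proof (Rmin_l eps h0). pose proof (Rmin_r eps h0).
    pose proof (Rmin_l (e / INR k) (dc / INR k)). pose proof (Rmin_r (e / INR k) (dc / INR k)).
    assert (0 < Rmin (Rmin eps h0) (Rmin (e / INR k) (dc / INR k))) by (repeat apply Rmin_pos; lra).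
    assert (INR k * (e / INR k) = e) by (field; lra). assert (INR k * (dc / INR k) = dc) by (field; lra).
    unfold t. repeat split; try lra; nra. }
  destruct Ht as [Ht [Hth [Hte Htd]]].
  destruct (Derive_n_defect_zero_near t (F t) j ltac:(lra) (Halg t Ht) Hj) as [xi [Hxi Hz]].
  exists xi. split; [lra|]. rewrite <- (Rminus_0_r (Derive_n _ j xi)), <- Hz.
  eapply Rle_trans; [apply Derive_n_defect_close; auto|].
  - exact (proj1 (proj1 (Halg t Ht))).
  - intros a Ha. apply HM; [exact Ha | lra].
  - intros a y Ha. rewrite <- HF0, Rabs_minus_sym. left. apply HC; [lra | rewrite Rminus_0_r, Rabs_right; lra | lia].
  - right. unfold d. field. pose proof (pos_INR (S j)). nra.
Qed.

Lemma limit_algebra_sub_gimel eps f : 0 < eps -> limit_algebra k eps conf_curve f -> gimel k D A f.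
Proof.
  intros He [F [HF0 [Hcf [Halg HCm]]]]. split; auto.
  apply (jets_agree_iff_defect_bound f (proj1 Hcf)).
  apply (flat_bound _ A 1 k Hk); [lra | apply smooth_smooth_on, smooth_defect, Hcf |].
  apply (Derive_n_defect_vanish_of_limit eps F); auto. apply Hcf.
Qed.

(** * Interpolation towards a function satisfying the jet condition *)

Section Interpolation.
Variables (eps c0 : R).
Hypothesis Hkeps : INR k * eps <= 1.
Hypothesis Hc0 : 0 < c0.
Hypothesis Hsep : forall t, 0 <= t < eps -> forall i m, (i < k)%nat -> (m < k)%nat ->
  c0 <= 1 - cos (xpt A t i - P (xpt A t m)).

Variable f : R -> R.
Hypothesis Hf : smooth f.

Definition interp_basis (i : nat) (t x : R) : R :=
  rprod k (fun l => if Nat.eq_dec l i then 1 else sin (x - xpt A t l)) *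
  rprod k (fun m => 1 - cos (x - P (xpt A t m))).

Definition interp_coef (i : nat) (t : R) : R :=
  (f (P (xpt A t i)) - f (xpt A t i)) / interp_basis i t (xpt A t i).

Definition interp_correction (t x : R) : R := rsum k (fun i => interp_coef i t * interp_basis i t x).

Lemma smooth_on_interp_basis U i X Y : open U -> smooth_on U X -> smooth_on U Y ->
  smooth_on U (fun y => interp_basis i (X y) (Y y)).
Proof.
  intros HU HX HY. unfold interp_basis. destruct smooth_sin_cos as [Hsin Hcos].
  assert (Hxpt : forall l, smooth_on U (fun y => xpt A (X y) l))
    by (intros l; unfold xpt; apply smooth_on_plus, smooth_on_mult; auto; apply smooth_on_const; auto).
  apply smooth_on_mult; auto.
  - apply (smooth_on_rprod _ HU k (fun l y => if Nat.eq_dec l i then 1 else sin (Y y - xpt A (X y) l))).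
    intros l _. destruct (Nat.eq_dec l i); [apply smooth_on_const; auto|].
    apply smooth_on_comp; auto. apply smooth_on_minus; auto.
  - apply (smooth_on_rprod _ HU k (fun m y => 1 - cos (Y y - P (xpt A (X y) m)))). intros m _.
    apply smooth_on_minus; auto; [apply smooth_on_const; auto|]. apply smooth_on_comp; auto.
    apply smooth_on_minus; auto. apply smooth_on_comp; auto. apply smooth_taylor_poly.
Qed.

Lemma smooth_interp_basis i t : smooth (interp_basis i t).
Proof.
  pose proof (@open_true R_UniformSpace) as HT. apply smooth_on_True.
  apply (smooth_on_interp_basis _ i (fun _ => t) (fun y => y)); auto; [apply smooth_on_const | apply smooth_on_id]; auto.
Qed.

Lemma periodic_interp_basis i t : periodic (interp_basis i t).
Proof.
  intros x. unfold interp_basis. f_equal; apply rprod_ext; intros l _.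
  - destruct (Nat.eq_dec l i); auto.
    replace (x + 2 * PI - xpt A t l) with ((x - xpt A t l) + 2 * PI) by ring. apply sin_plus_2PI.
  - replace (x + 2 * PI - P (xpt A t l)) with ((x - P (xpt A t l)) + 2 * PI) by ring. now rewrite cos_plus_2PI.
Qed.

Lemma interp_basis_at_P i t m : (m < k)%nat -> interp_basis i t (P (xpt A t m)) = 0.
Proof.
  intros Hm. unfold interp_basis.
  rewrite (rprod_eq0 k (fun l => 1 - cos (P (xpt A t m) - P (xpt A t l))) m Hm); [ring|].
  now rewrite Rminus_diag, cos_0, Rminus_diag.
Qed.

Lemma interp_basis_at_xpt i t l : (l < k)%nat -> l <> i -> interp_basis i t (xpt A t l) = 0.
Proof.
  intros Hl Hli. unfold interp_basis. rewrite (rprod_eq0 k _ l Hl); [ring|].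
  destruct (Nat.eq_dec l i); [lia|]. now rewrite Rminus_diag, sin_0.
Qed.

Lemma interp_basis_lb t i : 0 < t < eps -> (i < k)%nat ->
  (t / 2) ^ (k - 1) * c0 ^ k <= Rabs (interp_basis i t (xpt A t i)).
Proof.
  intros Ht Hi. unfold interp_basis. rewrite Rabs_mult.
  apply Rmult_le_compat; [apply pow_le; lra | apply pow_le; lra | |].
  - rewrite <- (rprod_const_but_one k i (t / 2) Hi), rprod_abs. apply rprod_le. intros l Hl.
    destruct (Nat.eq_dec l i); [rewrite Rabs_R1; lra|]. split; [lra|].
    pose proof (xpt_sep A t i l k ltac:(lra) Hi Hl ltac:(auto)).
    assert (Hx1 : Rabs (xpt A t i - xpt A t l) <= 1) by nra.
    pose proof (sin_abs_lb _ Hx1). lra.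
  - rewrite <- rprod_const, rprod_abs. apply rprod_le. intros m Hm.
    specialize (Hsep t ltac:(lra) i m Hi Hm). rewrite Rabs_right; lra.
Qed.

Lemma interp_basis_neq0 t i : 0 < t < eps -> (i < k)%nat -> interp_basis i t (xpt A t i) <> 0.
Proof.
  intros Ht Hi E. pose proof (interp_basis_lb t i Ht Hi) as H. rewrite E, Rabs_R0 in H.
  assert (0 < (t / 2) ^ (k - 1) * c0 ^ k) by (apply Rmult_lt_0_compat; apply pow_lt; lra). lra.
Qed.

Lemma interp_correction_at_P t i : (i < k)%nat -> interp_correction t (P (xpt A t i)) = 0.
Proof. intros Hi. apply rsum_eq0. intros l _. rewrite interp_basis_at_P; auto. ring. Qed.

Lemma interp_correction_at_xpt t i : 0 < t < eps -> (i < k)%nat ->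
  interp_correction t (xpt A t i) = f (P (xpt A t i)) - f (xpt A t i).
Proof.
  intros Ht Hi. unfold interp_correction. rewrite (rsum_eq1 k _ i Hi).
  - unfold interp_coef. field. apply interp_basis_neq0; auto.
  - intros l Hl Hli. rewrite interp_basis_at_xpt; auto. ring.
Qed.

(* [x_i - A] is at most [k t], the defect is [O((x - A)^k)], and the basis is at least of order [t^(k-1)]. *)
Lemma interp_coef_bound C dH i t : (i < k)%nat ->
  (forall x, A < x < A + dH -> Rabs (f (P x) - f x) <= C * (x - A) ^ k) ->
  0 < t < eps -> INR k * t < dH ->
  Rabs (interp_coef i t) <= Rabs C * INR k ^ k * 2 ^ (k - 1) / c0 ^ k * t.
Proof.
  intros Hi HH Ht HtH. assert (HkR : 1 <= INR k) by (apply (le_INR 1); auto).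
  destruct (xpt_bounds A t i k Hi ltac:(lra)) as [Hx1 Hx2].
  assert (Hxp : 0 < xpt A t i - A) by (unfold xpt; pose proof (lt_0_INR (S i) ltac:(lia)); nra).
  pose proof (interp_basis_lb t i Ht Hi) as HLB.
  assert (HLBp : 0 < (t / 2) ^ (k - 1) * c0 ^ k) by (apply Rmult_lt_0_compat; apply pow_lt; lra).
  assert (HHx : Rabs (f (P (xpt A t i)) - f (xpt A t i)) <= Rabs C * (INR k ^ k * t ^ k)).
  { eapply Rle_trans; [apply HH; lra|].
    eapply Rle_trans; [apply Rmult_le_compat_r; [apply pow_le; lra | apply Rle_abs]|].
    apply Rmult_le_compat_l; [apply Rabs_pos|]. rewrite <- Rpow_mult_distr. apply pow_incr. lra. }
  unfold interp_coef, Rdiv. rewrite Rabs_mult, Rabs_inv.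
  apply Rle_trans with (Rabs C * (INR k ^ k * t ^ k) * / ((t / 2) ^ (k - 1) * c0 ^ k)).
  - apply Rmult_le_compat; auto; [apply Rabs_pos | left; apply Rinv_0_lt_compat; lra | apply Rinv_le_contravar; auto].
  - destruct k as [|k']; [lia|]. replace (S k' - 1)%nat with k' by lia.
    replace (t ^ S k') with (t * t ^ k') by (simpl; ring).
    unfold Rdiv. rewrite Rpow_mult_distr, pow_inv.
    assert (0 < t ^ k') by (apply pow_lt; lra). assert (0 < 2 ^ k') by (apply pow_lt; lra).
    assert (0 < c0 ^ S k') by (apply pow_lt; lra).
    right. field. repeat split; lra.
Qed.

Hypothesis Hjets : forall j, (j < k)%nat -> Derive_n f j A = Derive_n (fun x => f (D x)) j A.

Lemma interp_coef_at_0 i : interp_coef i 0 = 0.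
Proof.
  assert (HfA : f A = f (D A)) by (apply (Hjets 0%nat); lia).
  unfold interp_coef, xpt. rewrite Rmult_0_r, Rplus_0_r, taylor_poly_center, <- HfA. unfold Rdiv. ring.
Qed.

Lemma interp_coef_cont_within i t0 : (i < k)%nat -> 0 <= t0 < eps -> cont_within eps (interp_coef i) t0.
Proof.
  intros Hi Ht0. destruct (Req_dec t0 0) as [->|Ht0'].
  - destruct (proj1 (jets_agree_iff_defect_bound f Hf) Hjets) as [C [dH [HdH HH]]].
    assert (HkR : 1 <= INR k) by (apply (le_INR 1); auto).
    set (K := Rabs C * INR k ^ k * 2 ^ (k - 1) / c0 ^ k).
    assert (HK : 0 <= K).
    { unfold K. repeat apply Rmult_le_pos; try apply pow_le; try lra; [apply Rabs_pos|].
      left. apply Rinv_0_lt_compat, pow_lt; lra. }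
    intros d Hd. exists (Rmin (dH / INR k) (d / (K + 1))). split; [apply Rmin_pos; apply Rdiv_lt_0_compat; lra|].
    intros t Ht Htt. rewrite interp_coef_at_0, Rminus_0_r. rewrite Rminus_0_r in Htt.
    destruct (Req_dec t 0) as [->|Ht']; [rewrite interp_coef_at_0, Rabs_R0; auto|].
    rewrite Rabs_right in Htt by lra.
    pose proof (Rmin_l (dH / INR k) (d / (K + 1))). pose proof (Rmin_r (dH / INR k) (d / (K + 1))).
    eapply Rle_lt_trans; [apply (interp_coef_bound C dH i t Hi HH); [lra|]|].
    { apply Rlt_le_trans with (INR k * (dH / INR k)); [apply Rmult_lt_compat_l; lra | right; field; lra]. }
    fold K. apply Rle_lt_trans with (K * (d / (K + 1))); [apply Rmult_le_compat_l; lra|].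
    apply Rlt_le_trans with ((K + 1) * (d / (K + 1))); [apply Rmult_lt_compat_r; [apply Rdiv_lt_0_compat|]; lra|].
    right. field. lra.
  - apply cont_within_of_cont_at, cont_at_of_continuity_pt. unfold interp_coef.
    pose proof (@open_true R_UniformSpace) as HT.
    assert (Hxpt : smooth_on (fun _ => True) (fun t => xpt A t i))
      by (unfold xpt; apply smooth_on_plus, smooth_on_mult; auto; try apply smooth_on_const; auto; apply smooth_on_id; auto).
    apply (continuity_pt_div (fun t => f (P (xpt A t i)) - f (xpt A t i)) (fun t => interp_basis i t (xpt A t i))).
    + apply continuity_pt_of_ex_derive. apply (smooth_on_ex_derive (fun _ => True)); [|exact I].
      apply smooth_on_minus; auto; apply smooth_on_comp; auto.
      apply smooth_on_comp; auto. apply smooth_taylor_poly.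
    + apply continuity_pt_of_ex_derive. apply (smooth_on_ex_derive (fun _ => True)); [|exact I].
      apply smooth_on_interp_basis; auto. apply smooth_on_id; auto.
    + apply interp_basis_neq0; auto. lra.
Qed.

Lemma smooth_interp_correction t : smooth (interp_correction t).
Proof.
  pose proof (@open_true R_UniformSpace) as HT. apply smooth_on_True.
  apply (smooth_on_rsum _ HT k (fun i x => interp_coef i t * interp_basis i t x)). intros i _.
  apply smooth_on_mult, smooth_smooth_on, smooth_interp_basis; auto. apply smooth_on_const; auto.
Qed.

Lemma Cn_family_interp_correction n : Cn_family eps n interp_correction.
Proof.
  assert (Hxpt : forall l t0, cont_within eps (fun t => xpt A t l) t0).
  { intros l t0. apply cont_within_of_cont_at, cont_at_of_ex_derive. unfold xpt. auto_derive. exact I. }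
  assert (HPxpt : forall m t0, cont_within eps (fun t => P (xpt A t m)) t0).
  { intros m t0. apply cont_within_of_cont_at, cont_at_of_ex_derive.
    apply (ex_derive_comp P (fun t => xpt A t m)); [exact (smooth_taylor_poly D A (k - 1) 1%nat _)|].
    unfold xpt. auto_derive. exact I. }
  apply (Cn_family_rsum eps n k (fun i t x => interp_coef i t * interp_basis i t x)). intros i Hi.
  apply (Cn_family_mult eps n (fun t _ => interp_coef i t) (interp_basis i)).
  { apply Cn_family_const. intros t0 Ht0. apply interp_coef_cont_within; auto. }
  apply (Cn_family_mult eps n (fun t x => rprod k (fun l => if Nat.eq_dec l i then 1 else sin (x - xpt A t l)))
    (fun t x => rprod k (fun m => 1 - cos (x - P (xpt A t m))))).
  - apply (Cn_family_rprod eps n k (fun l t x => if Nat.eq_dec l i then 1 else sin (x - xpt A t l))).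
    intros l _. destruct (Nat.eq_dec l i); [apply (Cn_family_const eps n (fun _ => 1)); intros; apply cont_within_const|].
    apply Cn_family_ext with (fun t x => sin (x - xpt A t l + 0)); [intros; now rewrite Rplus_0_r|].
    apply Cn_family_sin_shift. intros; apply Hxpt.
  - apply (Cn_family_rprod eps n k (fun m t x => 1 - cos (x - P (xpt A t m)))). intros m _.
    apply Cn_family_ext with (fun t x => 1 + (-1) * sin (x - P (xpt A t m) + PI / 2)).
    { intros t x. rewrite cos_sin. replace (PI / 2 + (x - P (xpt A t m))) with (x - P (xpt A t m) + PI / 2) by ring. ring. }
    apply (Cn_family_plus eps n (fun _ _ => 1)); [apply (Cn_family_const eps n (fun _ => 1)); intros; apply cont_within_const|].
    apply (Cn_family_mult eps n (fun _ _ => -1)); [apply (Cn_family_const eps n (fun _ => -1)); intros; apply cont_within_const|].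
    apply (Cn_family_sin_shift eps n (fun t => P (xpt A t m))). intros; apply HPxpt.
Qed.

Lemma gimel_sub_limit_algebra : periodic f -> limit_algebra k eps conf_curve f.
Proof.
  intros Hper.
  assert (HF : forall t j x, Derive_n (fun y => f y + interp_correction t y) j x
                            = Derive_n f j x + Derive_n (interp_correction t) j x).
  { intros t j x. apply Derive_n_plus; apply smooth_locally; auto. apply smooth_interp_correction. }
  exists (fun t x => f x + interp_correction t x). split; [|split; [split; auto | split]].
  - apply functional_extensionality. intros x. unfold interp_correction.
    rewrite rsum_eq0; [ring|]. intros i _. rewrite interp_coef_at_0. ring.
  - intros t Ht. split; [split|].
    + apply smooth_on_True, smooth_on_plus; [apply open_true | |]; apply smooth_smooth_on;
        auto using smooth_interp_correction.
    + intros x. rewrite Hper. unfold interp_correction. f_equal. apply rsum_ext. intros i _.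
      now rewrite periodic_interp_basis.
    + intros i Hi. rewrite conf_curve_even, conf_curve_odd, interp_correction_at_P, interp_correction_at_xpt by auto.
      ring.
  - intros t0 Ht0 d Hd.
    destruct (finite_threshold (fun j h => forall t, 0 <= t < eps -> Rabs (t - t0) < h -> forall x,
        Rabs (Derive_n (interp_correction t) j x - Derive_n (interp_correction t0) j x) < d) (2 * k))
      as [h [Hh HQ]].
    + intros j h h' Hh' HQ t Ht Htt x. apply HQ; auto. lra.
    + intros j Hj. destruct (Cn_family_Derive_n eps (2 * k) _ (Cn_family_interp_correction (2 * k)) j Hj) as [_ HU].
      destruct (proj2 (HU t0 Ht0) d Hd) as [h [Hh HQ]]. exists h. split; auto.
    + exists h. split; auto. intros t Ht Htt j x Hj. rewrite !HF.
      replace (Derive_n f j x + Derive_n (interp_correction t) j x - (Derive_n f j x + Derive_n (interp_correction t0) j x))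
        with (Derive_n (interp_correction t) j x - Derive_n (interp_correction t0) j x) by ring.
      apply HQ; auto.
Qed.

End Interpolation.
End Germ.

Theorem mainTheorem17 (k : nat) (A B : R) (D : R -> R) :
  (1 <= k)%nat ->
  ~ eqS1 A B ->
  local_diffeo_germ D A B ->
  in_CDbar k (gimel k D A).
Proof.
  intros Hk HAB HD.
  destruct (separation_near D A B k HD HAB) as [d1 [c0 [Hd1 [Hc0 Hsep]]]].
  destruct (taylor_poly_germ_injective_near D A B k Hk HD) as [d2 [Hd2 Hinj]].
  assert (HkR : 1 <= INR k) by (apply (le_INR 1); auto).
  set (eps := Rmin 1 (Rmin d1 d2) / (2 * INR k)).
  assert (Heps : 0 < eps /\ INR k * eps < 1 /\ INR k * eps < d1 /\ INR k * eps < d2).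
  { pose proof (Rmin_l 1 (Rmin d1 d2)). pose proof (Rmin_r 1 (Rmin d1 d2)).
    pose proof (Rmin_l d1 d2). pose proof (Rmin_r d1 d2).
    assert (0 < Rmin 1 (Rmin d1 d2)) by (repeat apply Rmin_pos; lra).
    assert (INR k * eps = Rmin 1 (Rmin d1 d2) / 2) by (unfold eps; field; lra).
    split; [apply Rdiv_lt_0_compat; lra | lra]. }
  destruct Heps as [Heps [Hk1 [Hkd1 Hkd2]]].
  assert (Hnear : forall t i, 0 <= t < eps -> (i < k)%nat -> Rabs (xpt A t i - A) < d1).
  { intros t i Ht Hi. destruct (xpt_bounds A t i k Hi ltac:(lra)). rewrite Rabs_right; nra. }
  exists eps, (conf_curve D A k). split; [|split].
  - apply alg_curve_germ_conf_curve; auto.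
  - intros t Ht. apply (in_config_conf_curve D A k Hk t d1 c0 d2); auto; nra.
  - intros f. split.
    + apply (limit_algebra_sub_gimel D A B k Hk HD eps f Heps).
    + intros [[Hf Hper] Hjets].
      apply (gimel_sub_limit_algebra D A B k Hk HD eps c0); [lra | exact Hc0 | | exact Hf | exact Hjets | exact Hper].
      intros t Ht i m Hi Hm. apply Hsep; apply Hnear; auto.
Qed.
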